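(* There exist $\varepsilon_1>0$ and $C>0$ such that for all $\varepsilon\in(0,\varepsilon_1]$ the following holds. Consider an initial condition of the hard core system with $n_1=n_2=1$ with $h_\varepsilon(0)\in\mathcal V$ and $\varphi_1=0$ at time $0$; let $t_{1,\varepsilon}=\inf\{t>0:\varphi_{1,\varepsilon}(t)=0\}$, and let $z_0(t)$ be the unperturbed ($\varepsilon=0$) motion from $z_0(0)=z_\varepsilon(0)$ (in which $X,W,s_1,s_2$ stay constant and $\varphi_1,\varphi_2$ rotate with constant rates $s_1/(2X)$ and $s_2/(2(1-X))$). If $t_{1,\varepsilon}\le (T\wedge T_\varepsilon)/\varepsilon$, then \[ \sup_{0\le t\le t_{1,\varepsilon}}|z_0(t)-z_\varepsilon(t)|\le C\varepsilon \] (distance in the coordinates $z=(X,W,s_1,s_2,\varphi_1,\varphi_2)$, angles modulo $1$).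
   Context: Hard core piston system with $n_1=n_2=1$: a piston of mass $M$ at position $X\in(0,1)$ with velocity $V$, a gas particle of mass $m_1$ at $x_1\in[0,X]$ with velocity $v_1$ and one of mass $m_2$ at $x_2\in[X,1]$ with velocity $v_2$; particles move freely between collisions, gas particles collide elastically with walls at $0$ and $1$ and with the piston (conservation of momentum and kinetic energy); if both gas particles hit the piston simultaneously, the left collision is applied first. Set $\varepsilon=M^{-1/2}$, $W=V/\varepsilon$, $s_i=|v_i|$, slow variables $h=(X,W,s_1,s_2)$. Angle variables in $\mathbb R/\mathbb Z$: $\varphi_1=x_1/(2X)$ if $v_1>0$, $\varphi_1=1-x_1/(2X)$ if $v_1<0$; $\varphi_2=(1-x_2)/(2(1-X))$ if $v_2<0$, $\varphi_2=1-(1-x_2)/(2(1-X))$ if $v_2>0$ (piston collisions occur exactly when $\varphi_i=1/2$). $z_\varepsilon(t)=(h_\varepsilon(t),\varphi_{1,\varepsilon}(t),\varphi_{2,\varepsilon}(t))$ denotes the motion with $M=\varepsilon^{-2}$ (left continuous in $t$). Averaged field $\bar H(h)=\bigl(W,\ m_1s_1^2/X-m_2s_2^2/(1-X),\ -s_1W/X,\ s_2W/(1-X)\bigr)$; $\bar h$ solves $d\bar h/d\tau=\bar H(\bar h)$, $\bar h(0)=h_\varepsilon(0)$. $\mathcal V\subset\mathbb R^4$ is compact with $h\in\mathcal V\Rightarrow X\in A,W\in B,s_i\in C$ for compact $A\subset(0,1)$, $B\subset\mathbb R$, $C\subset(0,\infty)$. $T>0$ fixed; $T_\varepsilon=\inf\{\tau\ge0:\bar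 h(\tau)\notin\mathcal V\text{ or }h_\varepsilon(\tau/\varepsilon)\notin\mathcal V\}$. *)

From Stdlib Require Import Reals.
From Coquelicot Require Import Coquelicot.
Open Scope R_scope.

(** State of the hard core piston system with n1 = n2 = 1:
    piston position/velocity (X,V), left particle (x1,v1), right particle (x2,v2). *)
Record pstate := mkP { pX : R; pV : R; px1 : R; pv1 : R; px2 : R; pv2 : R }.

(** Velocities after an elastic collision of a particle (mass m, velocity v)
    with the piston (mass M, velocity V): conservation of momentum and
    kinetic energy. *)
Definition elast_v (m M v V : R) : R := ((m - M) * v + 2 * M * V) / (m + M).
Definition elast_V (m M v V : R) : R := ((M - m) * V + 2 * m * v) / (m + M).

(** Collision rules applied at an instant (state with pre-collision
    velocities). *)
Definition coll_left_wall (s : pstate) : pstate :=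
  if Req_EM_T (px1 s) 0 then
    if Rlt_dec (pv1 s) 0 then mkP (pX s) (pV s) (px1 s) (- pv1 s) (px2 s) (pv2 s)
    else s
  else s.

Definition coll_left_piston (m1 M : R) (s : pstate) : pstate :=
  if Req_EM_T (px1 s) (pX s) then
    if Rlt_dec (pV s) (pv1 s) then
      mkP (pX s) (elast_V m1 M (pv1 s) (pV s)) (px1 s) (elast_v m1 M (pv1 s) (pV s))
          (px2 s) (pv2 s)
    else s
  else s.

Definition coll_right_piston (m2 M : R) (s : pstate) : pstate :=
  if Req_EM_T (px2 s) (pX s) then
    if Rlt_dec (pv2 s) (pV s) then
      mkP (pX s) (elast_V m2 M (pv2 s) (pV s)) (px1 s) (pv1 s)
          (px2 s) (elast_v m2 M (pv2 s) (pV s))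
    else s
  else s.

Definition coll_right_wall (s : pstate) : pstate :=
  if Req_EM_T (px2 s) 1 then
    if Rlt_dec 0 (pv2 s) then mkP (pX s) (pV s) (px1 s) (pv1 s) (px2 s) (- pv2 s)
    else s
  else s.

Definition coll (m1 m2 M : R) (s : pstate) : pstate :=
  coll_right_wall (coll_right_piston m2 M (coll_left_piston m1 M (coll_left_wall s))).

Definition free (tau : R) (s : pstate) : pstate :=
  mkP (pX s + tau * pV s) (pV s) (px1 s + tau * pv1 s) (pv1 s)
      (px2 s + tau * pv2 s) (pv2 s).

(** z : [0,oo) -> pstate is a (left continuous) motion of the hard core
    system with masses m1, m2 (gas particles) and M (piston): at every time
    the motion continues for a short while as free motion from the
    post-collision state, and just before every positive time it is free
    motion ending at the (pre-collision) state z t. *)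
Definition is_motion (m1 m2 M : R) (z : R -> pstate) : Prop :=
  (forall t, 0 <= t -> exists d, 0 < d /\
     forall s, t < s <= t + d -> z s = free (s - t) (coll m1 m2 M (z t))) /\
  (forall t, 0 < t -> exists d, 0 < d /\
     forall s, 0 <= s -> t - d < s <= t -> z s = free (s - t) (z t)).

Definition admissible (s : pstate) : Prop :=
  0 <= px1 s <= pX s /\ pX s <= px2 s <= 1.

Definition slow := (R * R * R * R)%type.
Definition hX (h : slow) : R := fst (fst (fst h)).
Definition hW (h : slow) : R := snd (fst (fst h)).
Definition hs1 (h : slow) : R := snd (fst h).
Definition hs2 (h : slow) : R := snd h.

Definition hstate (eps : R) (s : pstate) : slow :=
  (pX s, pV s / eps, Rabs (pv1 s), Rabs (pv2 s)).

(** Angle variables (real representatives in [0,1], understood mod 1).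
    Convention for a zero velocity: the first branch is used for v1 = 0,
    the first branch (v2 <= 0) for v2 = 0. *)
Definition phi1 (s : pstate) : R :=
  if Rle_dec 0 (pv1 s) then px1 s / (2 * pX s) else 1 - px1 s / (2 * pX s).
Definition phi2 (s : pstate) : R :=
  if Rle_dec (pv2 s) 0 then (1 - px2 s) / (2 * (1 - pX s))
  else 1 - (1 - px2 s) / (2 * (1 - pX s)).

Definition angle0 (a : R) : Prop := frac_part a = 0.

Definition dcirc (a b : R) : R :=
  Rmin (frac_part (a - b)) (1 - frac_part (a - b)).

Definition Hbar (m1 m2 : R) (h : slow) : slow :=
  (hW h,
   m1 * (hs1 h)^2 / hX h - m2 * (hs2 h)^2 / (1 - hX h),
   - hs1 h * hW h / hX h,
   hs2 h * hW h / (1 - hX h)).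

Definition solves_avg (m1 m2 : R) (hbar : R -> slow) (h0 : slow) : Prop :=
  hbar 0 = h0 /\
  forall tau, 0 <= tau ->
    is_derive (fun u => hX (hbar u)) tau (hX (Hbar m1 m2 (hbar tau))) /\
    is_derive (fun u => hW (hbar u)) tau (hW (Hbar m1 m2 (hbar tau))) /\
    is_derive (fun u => hs1 (hbar u)) tau (hs1 (Hbar m1 m2 (hbar tau))) /\
    is_derive (fun u => hs2 (hbar u)) tau (hs2 (Hbar m1 m2 (hbar tau))).

(** Distance |z0(t) - z_eps(t)| in the coordinates
    z = (X, W, s1, s2, phi1, phi2) (max norm, angles mod 1), where z0 is the
    unperturbed motion started at z_eps(0) = state s0. *)
Definition zdist (eps : R) (s0 : pstate) (t : R) (st : pstate) : R :=
  let h0 := hstate eps s0 in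
  let h := hstate eps st in
  Rmax (Rmax (Rmax (Rabs (hX h - hX h0)) (Rabs (hW h - hW h0)))
             (Rmax (Rabs (hs1 h - hs1 h0)) (Rabs (hs2 h - hs2 h0))))
       (Rmax (dcirc (phi1 st) (phi1 s0 + hs1 h0 / (2 * hX h0) * t))
             (dcirc (phi2 st) (phi2 s0 + hs2 h0 / (2 * (1 - hX h0)) * t))).

Definition t1_eps (z : R -> pstate) : Rbar :=
  Glb_Rbar (fun t => 0 < t /\ angle0 (phi1 (z t))).

Definition T_eps (eps : R) (Vs : slow -> Prop) (hbar : R -> slow)
  (z : R -> pstate) : Rbar :=
  Glb_Rbar (fun tau => 0 <= tau /\
    (~ Vs (hbar tau) \/ ~ Vs (hstate eps (z (tau / eps))))).

From mathcomp Require Import all_boot all_classical Rstruct Rstruct_topology topology.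

Definition compactR (A : R -> Prop) : Prop := compact A.
Definition compact4 (V : slow -> Prop) : Prop := compact V.

From Stdlib Require Import Reals.
From Coquelicot Require Import Coquelicot.
Open Scope R_scope.
From Stdlib Require Import Lra Lia Classical.

(* Take the piston mass M = eps^-2.  While the slow variables stay in V, the
   piston speed is O(eps) and the gas speeds lie in a compact subset of
   (0, oo); hence each angle turns at a rate bounded above and below, so that
   t1 = O(1) and the collisions of a given particle with the piston are
   separated by a fixed amount of time: there are O(1) of them before t1.
   Each piston collision changes |v_i| by O(eps) and preserves the total
   momentum; a wall collision changes eps times the momentum by O(eps), and
   before t1 the left wall is hit at most at time 0.  Hence s1, s2 and W drift
   by O(eps), and X, moving at speed O(eps) for a time O(1), as well.  Between
   collisions each angle turns at its unperturbed rate up to O(eps), and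
   collisions shift it by integers, so it stays O(eps)-close to the
   unperturbed rotation modulo 1.  Admissibility of the configuration is not
   part of [is_motion]; it propagates because every collision sends the
   velocities into the admissible region. *)

(** * Real-variable tools *)

Lemma real_induction (a b : R) (P : R -> Prop) :
  a <= b -> P a ->
  (forall s, a <= s < b -> P s ->
     exists d, 0 < d /\ forall u, s < u <= s + d -> u <= b -> P u) ->
  (forall s, a < s <= b -> (forall u, a <= u < s -> P u) -> P s) ->
  P b.
Proof.
  intros hab Pa Hright Hleft.
  set (E := fun x => a <= x <= b /\ forall y, a <= y <= x -> P y).
  assert (Ea : E a) by (split; [lra|]; intros y Hy; replace y with a by lra; exact Pa).
  destruct (completeness E) as [m [Hub Hlub]].
  { exists b; intros x [Hx _]; lra. }
  { exists a; exact Ea. }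
  assert (am : a <= m) by (apply Hub; exact Ea).
  assert (mb : m <= b) by (apply Hlub; intros x [Hx _]; lra).
  assert (below : forall y, a <= y < m -> P y).
  { intros y Hy. apply NNPP; intros nPy.
    assert (m <= y); [|lra].
    apply Hlub; intros x [Hx Hall].
    apply Rnot_lt_le; intros hyx. apply nPy, Hall; lra. }
  assert (Pm : P m).
  { destruct (Req_dec m a) as [->|ne]; [exact Pa|]. apply Hleft; [lra|exact below]. }
  destruct (Req_dec m b) as [<-|ne]; [exact Pm|].
  exfalso. destruct (Hright m ltac:(lra) Pm) as [d [dp Hd]].
  set (u := m + Rmin d (b - m)).
  assert (hmin : 0 < Rmin d (b - m) <= Rmin d (b - m)) by (split; [apply Rmin_pos|]; lra).
  pose proof (Rmin_l d (b - m)); pose proof (Rmin_r d (b - m)).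
  assert (Eu : E u).
  { split; [unfold u; lra|]. intros y Hy.
    destruct (Rlt_le_dec y m); [apply below; lra|].
    destruct (Req_dec y m) as [->|]; [exact Pm|]. apply Hd; unfold u in *; lra. }
  assert (u <= m) by (apply Hub; exact Eu). unfold u in *; lra.
Qed.

Lemma left_point_near (a s d : R) : a < s -> 0 < d ->
  exists u, a <= u < s /\ s - d < u.
Proof.
  intros h1 h2. exists (Rmax a (s - d / 2)).
  destruct (Rle_dec a (s - d / 2)).
  - rewrite Rmax_right by lra. lra.
  - rewrite Rmax_left by lra. lra.
Qed.

(* [f] is [L]-Lipschitz on both sides of every point, except for right jumps:
   one of size [J0] at [a] and others of size [J] at points of [jump], which are
   [1/N]-separated, so that at most [1 + N (b - a)] of them occur. *)
Lemma increment_with_jumps_le (a b L J0 J N : R) (f : R -> R) (jump : R -> Prop) :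
  a <= b -> 0 <= L -> 0 <= J0 -> 0 <= J -> 0 < N ->
  (forall c c', a < c -> c < c' -> c' < b -> jump c -> jump c' -> c + / N <= c') ->
  (forall s, a <= s < b -> exists d j, 0 < d /\ 0 <= j /\
      (j = 0 \/ (s = a /\ j <= J0) \/ (a < s /\ jump s /\ j <= J)) /\
      forall u, s < u <= s + d -> Rabs (f u - f s) <= L * (u - s) + j) ->
  (forall s, a < s <= b -> exists d, 0 < d /\
      forall u, s - d < u < s -> Rabs (f s - f u) <= L * (s - u)) ->
  Rabs (f b - f a) <= L * (b - a) + J0 + J * (2 + N * (b - a)).
Proof.
  intros hab hL hJ0 hJ hN Hsep Hright Hleft.
  assert (NV : N * / N = 1) by (apply Rinv_r; lra).
  set (P := fun u => a <= u /\
    (Rabs (f u - f a) <= L * (u - a) + J0 + J \/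
     exists c, a < c < u /\ jump c /\
       Rabs (f u - f a) <= L * (u - a) + J0 + J * (2 + N * (c - a)))).
  assert (Pb : P b).
  { apply (real_induction a b P hab).
    - split; [lra|left]. rewrite Rminus_diag, Rabs_R0; lra.
    - intros s Hs [_ Ps]. destruct (Hright s Hs) as [d [j [dp [jp [Hj Hd]]]]].
      exists d; split; [exact dp|]. intros u Hu Hub. split; [lra|].
      assert (Hfu := Hd u Hu).
      assert (tri : Rabs (f u - f a) <= Rabs (f u - f s) + Rabs (f s - f a)).
      { replace (f u - f a) with ((f u - f s) + (f s - f a)) by ring. apply Rabs_triang. }
      destruct Ps as [P1|[c [Hc [Jc P2]]]];
        destruct Hj as [j0|[[sa jJ0]|[sa [Js jJ]]]].
      + left. subst j. nra.
      + left. subst s. rewrite Rminus_diag, Rabs_R0 in P1. nra.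
      + right. exists s. split; [lra|]. split; [exact Js|].
        assert (0 <= J * (N * (s - a))) by (apply Rmult_le_pos; nra). nra.
      + right. exists c. split; [lra|]. split; [exact Jc|]. subst j. nra.
      + lra.
      + right. exists s. split; [lra|]. split; [exact Js|].
        assert (cs := Hsep c s ltac:(lra) ltac:(lra) ltac:(lra) Jc Js).
        assert (N * (c - a) + 1 <= N * (s - a)) by nra.
        nra.
    - intros s Hs Hbelow. destruct (Hleft s Hs) as [d [dp Hd]].
      destruct (left_point_near a s d ltac:(lra) dp) as [u [Hu1 Hu2]].
      destruct (Hbelow u Hu1) as [_ Pu]. assert (Hfu := Hd u ltac:(lra)).
      assert (tri : Rabs (f s - f a) <= Rabs (f s - f u) + Rabs (f u - f a)).
      { replace (f s - f a) with ((f s - f u) + (f u - f a)) by ring. apply Rabs_triang. }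
      split; [lra|]. destruct Pu as [P1|[c [Hc [Jc P2]]]].
      + left. nra.
      + right. exists c. split; [lra|]. split; [exact Jc|]. nra. }
  assert (0 <= J * (N * (b - a))) by (apply Rmult_le_pos; nra).
  destruct Pb as [_ [P1|[c [Hc [Jc P2]]]]]; [nra|].
  assert (J * (N * (c - a)) <= J * (N * (b - a))) by (apply Rmult_le_compat_l; nra). nra.
Qed.

(* Same scheme for a quantity whose right jumps lie in an additive set [Pk]
   (the integers, for angle representatives) and which drifts at rate [w] up
   to an error [L]. *)
Lemma increment_up_to_jumps (a b w L : R) (f : R -> R) (Pk : R -> Prop) :
  Pk 0 -> (forall x y, Pk x -> Pk y -> Pk (x + y)) -> a <= b ->
  (forall s, a <= s < b -> exists d k, 0 < d /\ Pk k /\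
     forall u, s < u <= s + d -> Rabs (f u - f s - k - w * (u - s)) <= L * (u - s)) ->
  (forall s, a < s <= b -> exists d, 0 < d /\
     forall u, s - d < u < s -> Rabs (f s - f u - w * (s - u)) <= L * (s - u)) ->
  exists k, Pk k /\ Rabs (f b - f a - k - w * (b - a)) <= L * (b - a).
Proof.
  intros P0 Padd hab Hright Hleft.
  apply (real_induction a b
    (fun u => exists k, Pk k /\ Rabs (f u - f a - k - w * (u - a)) <= L * (u - a)) hab).
  - exists 0; split; [exact P0|].
    replace (f a - f a - 0 - w * (a - a)) with 0 by ring. rewrite Rabs_R0; lra.
  - intros s Hs [k [Pk1 Hk]]. destruct (Hright s Hs) as [d [k2 [dp [Pk2 Hd]]]].
    exists d; split; [exact dp|]. intros u Hu _. exists (k + k2); split; [auto|].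
    assert (H := Hd u Hu).
    replace (f u - f a - (k + k2) - w * (u - a)) with
      ((f u - f s - k2 - w * (u - s)) + (f s - f a - k - w * (s - a))) by ring.
    eapply Rle_trans; [apply Rabs_triang|]. lra.
  - intros s Hs Hbelow. destruct (Hleft s Hs) as [d [dp Hd]].
    destruct (left_point_near a s d ltac:(lra) dp) as [u [Hu1 Hu2]].
    destruct (Hbelow u Hu1) as [k [Pk1 Hk]]. exists k; split; [exact Pk1|].
    assert (H := Hd u ltac:(lra)).
    replace (f s - f a - k - w * (s - a)) with
      ((f s - f u - w * (s - u)) + (f u - f a - k - w * (u - a))) by ring.
    eapply Rle_trans; [apply Rabs_triang|]. lra.
Qed.

Lemma affine_left_lower_bound (s d a x r : R) : 0 < d ->
  (forall u, s - d < u < s -> a <= x + (u - s) * r) -> a <= x.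
Proof.
  intros dp H. apply Rnot_lt_le; intros hx.
  set (e := Rmin (d / 2) ((a - x) / (2 * (Rabs r + 1)))).
  pose proof (Rabs_pos r).
  assert (ep : 0 < e) by (apply Rmin_pos; [lra|apply Rdiv_lt_0_compat; lra]).
  assert (e1 : e <= d / 2) by apply Rmin_l.
  assert (e2 : e * (Rabs r + 1) <= (a - x) / 2).
  { apply Rle_trans with ((a - x) / (2 * (Rabs r + 1)) * (Rabs r + 1)).
    - apply Rmult_le_compat_r; [lra|apply Rmin_r].
    - right; field; lra. }
  assert (Hu := H (s - e) ltac:(lra)).
  assert ((s - e - s) * r <= e * Rabs r) by (unfold Rabs; destruct Rcase_abs; nra).
  nra.
Qed.

Lemma affine_left_upper_bound (s d a x r : R) : 0 < d ->
  (forall u, s - d < u < s -> x + (u - s) * r <= a) -> x <= a.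
Proof.
  intros dp H. assert (- a <= - x); [|lra].
  apply (affine_left_lower_bound s d (- a) (- x) (- r) dp).
  intros u Hu. specialize (H u Hu). lra.
Qed.

Lemma affine_rate_deviation tau x A B w L : 0 <= tau ->
  Rabs (x - tau * A) <= tau * B -> Rabs (A - w) + B <= L ->
  Rabs (x - w * tau) <= L * tau.
Proof.
  intros ht h1 h2. replace (x - w * tau) with ((x - tau * A) + tau * (A - w)) by ring.
  eapply Rle_trans; [apply Rabs_triang|]. rewrite Rabs_mult, (Rabs_right tau) by lra.
  pose proof (Rabs_pos (A - w)). nra.
Qed.

Lemma ratio_sub_le (aL cmax a a0 x x0 : R) :
  0 < aL -> aL <= x -> aL <= x0 <= 1 -> 0 <= a0 <= cmax ->
  Rabs (a / (2 * x) - a0 / (2 * x0)) <= (Rabs (a - a0) + cmax * Rabs (x - x0)) / (2 * aL ^ 2).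
Proof.
  intros ha hx hx0 ha0.
  replace (a / (2 * x) - a0 / (2 * x0))
    with (((a - a0) * x0 + a0 * (x0 - x)) / (2 * x * x0)) by (field; lra).
  rewrite Rabs_div by nra. rewrite (Rabs_right (2 * x * x0)) by nra.
  assert (num : Rabs ((a - a0) * x0 + a0 * (x0 - x)) <= Rabs (a - a0) + cmax * Rabs (x - x0)).
  { eapply Rle_trans; [apply Rabs_triang|]. rewrite !Rabs_mult.
    rewrite (Rabs_right x0), (Rabs_right a0) by lra.
    rewrite <- (Rabs_Ropp (x0 - x)). replace (- (x0 - x)) with (x - x0) by ring.
    pose proof (Rabs_pos (a - a0)); pose proof (Rabs_pos (x - x0)). nra. }
  pose proof (Rabs_pos (a - a0)); pose proof (Rabs_pos (x - x0)).
  apply Rle_trans with ((Rabs (a - a0) + cmax * Rabs (x - x0)) / (2 * x * x0)).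
  - unfold Rdiv. apply Rmult_le_compat_r; [left; apply Rinv_0_lt_compat; nra|exact num].
  - unfold Rdiv. apply Rmult_le_compat_l; [nra|]. apply Rinv_le_contravar; nra.
Qed.

Definition is_int (k : R) : Prop := exists n, k = IZR n.

Lemma is_int_0 : is_int 0.
Proof. exists 0%Z; reflexivity. Qed.

Lemma is_int_add x y : is_int x -> is_int y -> is_int (x + y).
Proof. intros [a ->] [b ->]. exists (a + b)%Z. now rewrite plus_IZR. Qed.

Lemma dcirc_le_sub_int a b n : dcirc a b <= Rabs (a - b - IZR n).
Proof.
  unfold dcirc. set (x := a - b). pose proof (base_fp x) as [f1 f2].
  pose proof (Rplus_Int_part_frac_part x) as ex.
  set (f := frac_part x) in *. set (m := Int_part x) in *.
  replace (x - IZR n) with (f + IZR (m - n)) by (rewrite minus_IZR; lra).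
  destruct (Z.lt_ge_cases (m - n) 0) as [h|h].
  - assert (IZR (m - n) <= -1) by (apply IZR_le; lia).
    rewrite Rabs_left by lra. apply Rle_trans with (1 - f); [apply Rmin_r|lra].
  - assert (0 <= IZR (m - n)) by (apply IZR_le; lia).
    rewrite Rabs_right by lra. apply Rle_trans with f; [apply Rmin_l|lra].
Qed.

Lemma frac_part_1 : frac_part 1 = 0.
Proof. now destruct (Int_part_frac_part_spec 1 1%Z 0 ltac:(lra) ltac:(simpl; lra)). Qed.

(** * Collisions *)

Definition piston_mass (eps : R) : R := / eps ^ 2.

Lemma piston_mass_pos eps : 0 < eps -> 0 < piston_mass eps.
Proof. intros. apply Rinv_0_lt_compat, pow_lt; lra. Qed.

Lemma mass_ratio_bounds m eps : 0 < m -> 0 < eps ->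
  0 <= m / (m + piston_mass eps) <= m * eps ^ 2 /\
  0 <= piston_mass eps / (m + piston_mass eps) <= 1.
Proof.
  intros hm he. pose proof (piston_mass_pos eps he) as hM.
  assert (e2 : 0 < eps ^ 2) by (apply pow_lt; lra).
  assert (m * eps ^ 2 = m / piston_mass eps) by (unfold piston_mass; field; lra).
  split; split; unfold Rdiv.
  - apply Rmult_le_pos; [lra|left; apply Rinv_0_lt_compat; lra].
  - rewrite H. apply Rmult_le_compat_l; [lra|]. apply Rinv_le_contravar; lra.
  - apply Rmult_le_pos; [lra|left; apply Rinv_0_lt_compat; lra].
  - apply (Rmult_le_reg_r (m + piston_mass eps)); [lra|].
    rewrite Rmult_assoc, Rinv_l by lra. lra.
Qed.

Lemma elast_relative_velocity m M v V : 0 < m -> 0 < M ->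
  elast_v m M v V - elast_V m M v V = - (v - V).
Proof. intros; unfold elast_v, elast_V; field; lra. Qed.

Lemma elast_v_add_le m eps v V : 0 < m -> 0 < eps ->
  Rabs (elast_v m (piston_mass eps) v V + v) <= 2 * m * eps ^ 2 * Rabs v + 2 * Rabs V.
Proof.
  intros hm he. pose proof (piston_mass_pos eps he) as hM.
  destruct (mass_ratio_bounds m eps hm he) as [h1 h2].
  set (M := piston_mass eps) in *.
  replace (elast_v m M v V + v)
    with (2 * (m / (m + M)) * v + 2 * (M / (m + M)) * V) by (unfold elast_v; field; lra).
  eapply Rle_trans; [apply Rabs_triang|]. rewrite !Rabs_mult.
  rewrite (Rabs_right 2), (Rabs_right (m / (m + M))), (Rabs_right (M / (m + M))) by lra.
  pose proof (Rabs_pos v); pose proof (Rabs_pos V). nra.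
Qed.

Lemma elast_V_sub_le m eps v V : 0 < m -> 0 < eps ->
  Rabs (elast_V m (piston_mass eps) v V - V) <= 2 * m * eps ^ 2 * (Rabs v + Rabs V).
Proof.
  intros hm he. pose proof (piston_mass_pos eps he) as hM.
  destruct (mass_ratio_bounds m eps hm he) as [h1 _].
  set (M := piston_mass eps) in *.
  replace (elast_V m M v V - V) with (2 * (m / (m + M)) * (v - V))
    by (unfold elast_V; field; lra).
  rewrite !Rabs_mult, (Rabs_right 2), (Rabs_right (m / (m + M))) by lra.
  assert (Rabs (v - V) <= Rabs v + Rabs V)
    by (unfold Rminus; rewrite <- (Rabs_Ropp V); apply Rabs_triang).
  pose proof (Rabs_pos (v - V)). nra.
Qed.

Lemma elast_V_abs_le m eps v V : 0 < m -> 0 < eps ->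
  Rabs (elast_V m (piston_mass eps) v V) <= Rabs V + 2 * m * eps ^ 2 * (Rabs v + Rabs V).
Proof.
  intros hm he. pose proof (elast_V_sub_le m eps v V hm he).
  replace (elast_V m (piston_mass eps) v V)
    with ((elast_V m (piston_mass eps) v V - V) + V) by ring.
  eapply Rle_trans; [apply Rabs_triang|]. lra.
Qed.

Lemma coll_left_wall_cases s :
  (px1 s = 0 /\ pv1 s < 0 /\
   coll_left_wall s = mkP (pX s) (pV s) (px1 s) (- pv1 s) (px2 s) (pv2 s))
  \/ (coll_left_wall s = s /\ (px1 s = 0 -> 0 <= pv1 s)).
Proof.
  unfold coll_left_wall. destruct (Req_EM_T (px1 s) 0); destruct (Rlt_dec (pv1 s) 0);
    auto; right; split; auto; intros; lra.
Qed.

Lemma coll_left_piston_cases m M s :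
  (px1 s = pX s /\ pV s < pv1 s /\ coll_left_piston m M s =
     mkP (pX s) (elast_V m M (pv1 s) (pV s)) (px1 s) (elast_v m M (pv1 s) (pV s))
         (px2 s) (pv2 s))
  \/ (coll_left_piston m M s = s /\ (px1 s = pX s -> pv1 s <= pV s)).
Proof.
  unfold coll_left_piston. destruct (Req_EM_T (px1 s) (pX s)); destruct (Rlt_dec (pV s) (pv1 s));
    auto; right; split; auto; intros; lra.
Qed.

Lemma coll_right_piston_cases m M s :
  (px2 s = pX s /\ pv2 s < pV s /\ coll_right_piston m M s =
     mkP (pX s) (elast_V m M (pv2 s) (pV s)) (px1 s) (pv1 s)
         (px2 s) (elast_v m M (pv2 s) (pV s)))
  \/ (coll_right_piston m M s = s /\ (px2 s = pX s -> pV s <= pv2 s)).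
Proof.
  unfold coll_right_piston. destruct (Req_EM_T (px2 s) (pX s)); destruct (Rlt_dec (pv2 s) (pV s));
    auto; right; split; auto; intros; lra.
Qed.

Lemma coll_right_wall_cases s :
  (px2 s = 1 /\ 0 < pv2 s /\
   coll_right_wall s = mkP (pX s) (pV s) (px1 s) (pv1 s) (px2 s) (- pv2 s))
  \/ (coll_right_wall s = s /\ (px2 s = 1 -> pv2 s <= 0)).
Proof.
  unfold coll_right_wall. destruct (Req_EM_T (px2 s) 1); destruct (Rlt_dec 0 (pv2 s));
    auto; right; split; auto; intros; lra.
Qed.

Ltac collision_stage lem x :=
  let a := fresh "a" in let b := fresh "b" in let e := fresh "e" in let n := fresh "n" in
  destruct (lem x) as [[a [b e]]|[e n]]; rewrite e; clear e;
  cbn [pX pV px1 pv1 px2 pv2] in *.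

Ltac collision_cases :=
  unfold coll;
  match goal with |- context [coll_left_wall ?x] =>
    collision_stage coll_left_wall_cases x end;
  match goal with |- context [coll_left_piston ?m ?M ?x] =>
    collision_stage (coll_left_piston_cases m M) x end;
  match goal with |- context [coll_right_piston ?m ?M ?x] =>
    collision_stage (coll_right_piston_cases m M) x end;
  match goal with |- context [coll_right_wall ?x] =>
    collision_stage coll_right_wall_cases x end.

Lemma coll_positions m1 m2 M st :
  pX (coll m1 m2 M st) = pX st /\ px1 (coll m1 m2 M st) = px1 st /\
  px2 (coll m1 m2 M st) = px2 st.
Proof. collision_cases; auto. Qed.

Lemma coll_v1_away m1 m2 M st :
  px1 st <> 0 -> px1 st <> pX st -> pv1 (coll m1 m2 M st) = pv1 st.
Proof. intros h1 h2. collision_cases; auto; lra. Qed.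

Lemma coll_v2_away m1 m2 M st :
  px2 st <> 1 -> px2 st <> pX st -> pv2 (coll m1 m2 M st) = pv2 st.
Proof. intros h1 h2. collision_cases; auto; lra. Qed.

Lemma coll_speed1_off_piston m1 m2 M st : 0 < pX st -> px1 st <> pX st ->
  Rabs (pv1 (coll m1 m2 M st)) = Rabs (pv1 st).
Proof. intros hX h. collision_cases; rewrite ?Rabs_Ropp; auto; lra. Qed.

Lemma coll_speed2_off_piston m1 m2 M st : pX st < 1 -> px2 st <> pX st ->
  Rabs (pv2 (coll m1 m2 M st)) = Rabs (pv2 st).
Proof. intros hX h. collision_cases; rewrite ?Rabs_Ropp; auto; lra. Qed.

Lemma Rabs_sub_Rabs_le a b : Rabs (Rabs a - Rabs b) <= Rabs (a + b).
Proof. unfold Rabs; repeat destruct Rcase_abs; lra. Qed.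

Lemma coll_speed1_jump m1 m2 eps st : 0 < m1 -> 0 < eps -> 0 < pX st ->
  Rabs (Rabs (pv1 (coll m1 m2 (piston_mass eps) st)) - Rabs (pv1 st))
    <= 2 * m1 * eps ^ 2 * Rabs (pv1 st) + 2 * Rabs (pV st).
Proof.
  intros hm he hX.
  assert (0 <= m1 * eps ^ 2 * Rabs (pv1 st))
    by (pose proof (Rabs_pos (pv1 st)); apply Rmult_le_pos; [apply Rmult_le_pos|]; nra).
  pose proof (Rabs_pos (pV st)).
  collision_cases; try (exfalso; lra);
  try (rewrite ?Rabs_Ropp, Rminus_diag, Rabs_R0; lra);
  (eapply Rle_trans; [apply Rabs_sub_Rabs_le|]; apply elast_v_add_le; lra).
Qed.

Lemma coll_speed2_jump m1 m2 eps st : 0 < m1 -> 0 < m2 -> 0 < eps -> 0 < pX st < 1 ->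
  Rabs (Rabs (pv2 (coll m1 m2 (piston_mass eps) st)) - Rabs (pv2 st)) <=
    2 * m2 * eps ^ 2 * Rabs (pv2 st)
    + 2 * (Rabs (pV st) + 2 * m1 * eps ^ 2 * (Rabs (pv1 st) + Rabs (pV st))).
Proof.
  intros hm1 hm2 he hX.
  assert (e2 : 0 < eps ^ 2) by (apply pow_lt; lra).
  pose proof (Rabs_pos (pv1 st)); pose proof (Rabs_pos (pV st)); pose proof (Rabs_pos (pv2 st)).
  assert (0 <= m1 * eps ^ 2 * (Rabs (pv1 st) + Rabs (pV st)))
    by (apply Rmult_le_pos; [apply Rmult_le_pos|]; lra).
  assert (0 <= m2 * eps ^ 2 * Rabs (pv2 st)) by (apply Rmult_le_pos; [apply Rmult_le_pos|]; lra).
  pose proof (elast_V_abs_le m1 eps (pv1 st) (pV st) hm1 he).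
  collision_cases; try (exfalso; lra);
  try (rewrite ?Rabs_Ropp, Rminus_diag, Rabs_R0; lra);
  (eapply Rle_trans; [apply Rabs_sub_Rabs_le|];
   eapply Rle_trans; [apply elast_v_add_le; lra|]; lra).
Qed.

(* [eps (M V + m1 v1 + m2 v2)] with [M = eps^-2]. *)
Definition scaled_momentum (eps m1 m2 : R) (st : pstate) : R :=
  pV st / eps + eps * (m1 * pv1 st + m2 * pv2 st).

Lemma scaled_momentum_coll_left_piston eps m1 m2 s : 0 < m1 -> 0 < eps ->
  scaled_momentum eps m1 m2 (coll_left_piston m1 (piston_mass eps) s)
  = scaled_momentum eps m1 m2 s.
Proof.
  intros hm he. destruct (coll_left_piston_cases m1 (piston_mass eps) s) as [[_ [_ ->]]|[-> _]];
    [|reflexivity].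
  unfold scaled_momentum, elast_v, elast_V, piston_mass; cbn [pX pV px1 pv1 px2 pv2].
  assert (0 < eps ^ 2) by (apply pow_lt; lra). field. split; [lra|]. nra.
Qed.

Lemma scaled_momentum_coll_right_piston eps m1 m2 s : 0 < m2 -> 0 < eps ->
  scaled_momentum eps m1 m2 (coll_right_piston m2 (piston_mass eps) s)
  = scaled_momentum eps m1 m2 s.
Proof.
  intros hm he. destruct (coll_right_piston_cases m2 (piston_mass eps) s) as [[_ [_ ->]]|[-> _]];
    [|reflexivity].
  unfold scaled_momentum, elast_v, elast_V, piston_mass; cbn [pX pV px1 pv1 px2 pv2].
  assert (0 < eps ^ 2) by (apply pow_lt; lra). field. split; [lra|]. nra.
Qed.

Lemma scaled_momentum_coll_left_wall eps m1 m2 s : 0 < m1 -> 0 < eps ->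
  Rabs (scaled_momentum eps m1 m2 (coll_left_wall s) - scaled_momentum eps m1 m2 s)
    <= 2 * eps * m1 * Rabs (pv1 s) /\
  (px1 s <> 0 -> scaled_momentum eps m1 m2 (coll_left_wall s) = scaled_momentum eps m1 m2 s).
Proof.
  intros hm he. assert (0 <= 2 * eps * m1 * Rabs (pv1 s))
    by (pose proof (Rabs_pos (pv1 s)); apply Rmult_le_pos; [|lra]; nra).
  destruct (coll_left_wall_cases s) as [[h0 [_ ->]]|[-> _]].
  - split; [|intros; lra]. unfold scaled_momentum; cbn [pX pV px1 pv1 px2 pv2].
    replace (pV s / eps + eps * (m1 * - pv1 s + m2 * pv2 s)
             - (pV s / eps + eps * (m1 * pv1 s + m2 * pv2 s)))
      with (2 * eps * m1 * - pv1 s) by ring.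
    rewrite Rabs_mult, Rabs_Ropp, (Rabs_right (2 * eps * m1)) by nra. lra.
  - rewrite Rminus_diag, Rabs_R0. split; auto.
Qed.

Lemma scaled_momentum_coll_right_wall eps m1 m2 s : 0 < m2 -> 0 < eps ->
  Rabs (scaled_momentum eps m1 m2 (coll_right_wall s) - scaled_momentum eps m1 m2 s)
    <= 2 * eps * m2 * Rabs (pv2 s) /\
  (px2 s <> 1 -> scaled_momentum eps m1 m2 (coll_right_wall s) = scaled_momentum eps m1 m2 s).
Proof.
  intros hm he. assert (0 <= 2 * eps * m2 * Rabs (pv2 s))
    by (pose proof (Rabs_pos (pv2 s)); apply Rmult_le_pos; [|lra]; nra).
  destruct (coll_right_wall_cases s) as [[h0 [_ ->]]|[-> _]].
  - split; [|intros; lra]. unfold scaled_momentum; cbn [pX pV px1 pv1 px2 pv2].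
    replace (pV s / eps + eps * (m1 * pv1 s + m2 * - pv2 s)
             - (pV s / eps + eps * (m1 * pv1 s + m2 * pv2 s)))
      with (2 * eps * m2 * - pv2 s) by ring.
    rewrite Rabs_mult, Rabs_Ropp, (Rabs_right (2 * eps * m2)) by nra. lra.
  - rewrite Rminus_diag, Rabs_R0. split; auto.
Qed.

Lemma coll_scaled_momentum m1 m2 eps st : 0 < m1 -> 0 < m2 -> 0 < eps -> 0 < pX st < 1 ->
  let dQ := scaled_momentum eps m1 m2 (coll m1 m2 (piston_mass eps) st)
            - scaled_momentum eps m1 m2 st in
  Rabs dQ <= 2 * eps * m1 * Rabs (pv1 st) + 2 * eps * m2 * Rabs (pv2 st) /\
  (px1 st <> 0 -> Rabs dQ <= 2 * eps * m2 * Rabs (pv2 st)) /\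
  (px1 st <> 0 -> px2 st <> 1 -> dQ = 0).
Proof.
  intros hm1 hm2 he hX dQ. unfold dQ, coll.
  set (Q := scaled_momentum eps m1 m2).
  set (s1 := coll_left_wall st). set (s2 := coll_left_piston m1 (piston_mass eps) s1).
  set (s3 := coll_right_piston m2 (piston_mass eps) s2).
  destruct (scaled_momentum_coll_left_wall eps m1 m2 st hm1 he) as [w1 w1'].
  assert (q2 : Q s2 = Q s1) by (apply scaled_momentum_coll_left_piston; assumption).
  assert (q3 : Q s3 = Q s2) by (apply scaled_momentum_coll_right_piston; assumption).
  destruct (scaled_momentum_coll_right_wall eps m1 m2 s3 hm2 he) as [w4 w4'].
  fold s1 Q in w1, w1'. fold Q in w4, w4'.
  assert (f1 : pX s1 = pX st /\ px2 s1 = px2 st /\ pv2 s1 = pv2 st)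
    by (unfold s1; destruct (coll_left_wall_cases st) as [[_ [_ ->]]|[-> _]]; auto).
  assert (f2 : pX s2 = pX s1 /\ px2 s2 = px2 s1 /\ pv2 s2 = pv2 s1)
    by (unfold s2; destruct (coll_left_piston_cases m1 (piston_mass eps) s1)
          as [[_ [_ ->]]|[-> _]]; auto).
  assert (f3 : px2 s3 = px2 s2 /\ (px2 s2 <> pX s2 -> pv2 s3 = pv2 s2)).
  { unfold s3; destruct (coll_right_piston_cases m2 (piston_mass eps) s2)
      as [[e0 [_ ->]]|[-> _]]; cbn; [split; [auto|intros; contradiction]|auto]. }
  assert (v2 : px2 s3 = 1 -> pv2 s3 = pv2 st)
    by (intros h; destruct f3 as [f3 f3']; rewrite f3' by lra; lra).
  assert (e4 : Rabs (Q (coll_right_wall s3) - Q s3) <= 2 * eps * m2 * Rabs (pv2 st)).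
  { destruct (Req_dec (px2 s3) 1) as [h|h]; [rewrite <- (v2 h); exact w4|].
    rewrite (w4' h), Rminus_diag, Rabs_R0.
    pose proof (Rabs_pos (pv2 st)). apply Rmult_le_pos; [|lra]. nra. }
  replace (Q (coll_right_wall s3) - Q st) with
     ((Q (coll_right_wall s3) - Q s3) + (Q s1 - Q st)) by lra.
  split; [|split].
  - eapply Rle_trans; [apply Rabs_triang|]. lra.
  - intros h. rewrite (w1' h), Rminus_diag, Rplus_0_r. exact e4.
  - intros h h'. rewrite (w4' ltac:(lra)), (w1' h), q3, q2. ring.
Qed.

Lemma Rabs_ge_cases k x : k <= Rabs x -> x <= - k \/ k <= x.
Proof. unfold Rabs; destruct Rcase_abs; lra. Qed.

Lemma coll_outgoing m1 m2 eps st k : 0 < m1 -> 0 < m2 -> 0 < eps -> 0 < pX st < 1 -> 0 < k ->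
  let c := coll m1 m2 (piston_mass eps) st in
  k <= Rabs (pv1 c) -> k <= Rabs (pv2 c) ->
  Rabs (pV st) + 2 * m1 * eps ^ 2 * (Rabs (pv1 st) + Rabs (pV st)) < k / 2 ->
  Rabs (pV c) < k / 2 ->
  (px1 st = 0 -> 0 < pv1 c) /\ (px1 st = pX st -> pv1 c < pV c) /\
  (px2 st = pX st -> pV c < pv2 c) /\ (px2 st = 1 -> pv2 c < 0).
Proof.
  intros hm1 hm2 he hX hk c h1 h2 hV hVc. unfold c in *.
  pose proof (elast_V_abs_le m1 eps (pv1 st) (pV st) hm1 he).
  pose proof (piston_mass_pos eps he) as hM.
  assert (0 <= 2 * m1 * eps ^ 2 * (Rabs (pv1 st) + Rabs (pV st))).
  { pose proof (Rabs_pos (pv1 st)); pose proof (Rabs_pos (pV st)).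
    assert (0 < eps ^ 2) by (apply pow_lt; lra).
    apply Rmult_le_pos; [|lra]. apply Rmult_le_pos; lra. }
  destruct (Rabs_def2 (pV st) (k / 2) ltac:(lra)).
  destruct (Rabs_def2 (elast_V m1 (piston_mass eps) (pv1 st) (pV st)) (k / 2) ltac:(lra)).
  pose proof (elast_relative_velocity m1 _ (pv1 st) (pV st) hm1 hM).
  pose proof (elast_relative_velocity m2 _ (pv2 st) (pV st) hm2 hM).
  pose proof (elast_relative_velocity m2 _ (pv2 st)
                (elast_V m1 (piston_mass eps) (pv1 st) (pV st)) hm2 hM).
  revert h1 h2 hVc. collision_cases; intros h1 h2 hVc; apply Rabs_def2 in hVc;
  repeat split; intros; try (exfalso; lra);
  try (destruct (Rabs_ge_cases _ _ h1); lra); try (destruct (Rabs_ge_cases _ _ h2); lra).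
Qed.

Lemma phi1_at_piston st : px1 st = pX st -> 0 < pX st -> phi1 st = 1 / 2.
Proof. intros h hX. unfold phi1; rewrite h; destruct Rle_dec; field; lra. Qed.

Lemma phi1_at_wall st : px1 st = 0 -> 0 < pX st -> phi1 st = 0 \/ phi1 st = 1.
Proof. intros h hX. unfold phi1; rewrite h; destruct Rle_dec; [left|right]; field; lra. Qed.

Lemma phi2_at_piston st : px2 st = pX st -> pX st < 1 -> phi2 st = 1 / 2.
Proof. intros h hX. unfold phi2; rewrite h; destruct Rle_dec; field; lra. Qed.

Lemma phi2_at_wall st : px2 st = 1 -> pX st < 1 -> phi2 st = 0 \/ phi2 st = 1.
Proof. intros h hX. unfold phi2; rewrite h; destruct Rle_dec; [left|right]; field; lra. Qed.

Lemma is_int_sub_0_1 a b : (a = 0 \/ a = 1) -> (b = 0 \/ b = 1) -> is_int (a - b).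
Proof.
  intros [->| ->] [->| ->]; [exists 0%Z|exists (-1)%Z|exists 1%Z|exists 0%Z]; simpl; lra.
Qed.

Lemma phi1_coll_shift m1 m2 M st : 0 < pX st ->
  is_int (phi1 (coll m1 m2 M st) - phi1 st) /\
  (px1 st <> 0 -> phi1 (coll m1 m2 M st) = phi1 st).
Proof.
  intros hX. destruct (coll_positions m1 m2 M st) as [e1 [e2 e3]].
  set (c := coll m1 m2 M st) in *.
  destruct (Req_dec (px1 st) 0) as [h0|h0].
  - split; [|contradiction]. apply is_int_sub_0_1; apply phi1_at_wall; lra.
  - assert (phi1 c = phi1 st); [|split; [exists 0%Z; simpl; lra|auto]].
    destruct (Req_dec (px1 st) (pX st)) as [hx|hx].
    + rewrite (phi1_at_piston st hx hX), (phi1_at_piston c); lra.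
    + unfold phi1. unfold c; rewrite coll_v1_away by auto. fold c. now rewrite e1, e2.
Qed.

Lemma phi2_coll_shift m1 m2 M st : pX st < 1 -> is_int (phi2 (coll m1 m2 M st) - phi2 st).
Proof.
  intros hX. destruct (coll_positions m1 m2 M st) as [e1 [e2 e3]].
  set (c := coll m1 m2 M st) in *.
  destruct (Req_dec (px2 st) 1) as [h0|h0].
  - apply is_int_sub_0_1; apply phi2_at_wall; lra.
  - assert (phi2 c = phi2 st); [|exists 0%Z; simpl; lra].
    destruct (Req_dec (px2 st) (pX st)) as [hx|hx].
    + rewrite (phi2_at_piston st hx hX), (phi2_at_piston c); lra.
    + unfold phi2. unfold c; rewrite coll_v2_away by auto. fold c. now rewrite e1, e3.
Qed.

Lemma phi1_free_rate tau c : 0 <= tau -> 0 < pX c -> 0 < pX c + tau * pV c ->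
  0 <= px1 c <= pX c ->
  Rabs (phi1 (free tau c) - phi1 c - tau * (Rabs (pv1 c) / (2 * (pX c + tau * pV c))))
    <= tau * (Rabs (pV c) / (2 * (pX c + tau * pV c))).
Proof.
  intros ht hX hXe hx. set (Xe := pX c + tau * pV c) in *.
  assert (key : Rabs (px1 c * pV c / (pX c * Xe)) <= Rabs (pV c) / Xe).
  { rewrite Rabs_div by nra. rewrite Rabs_mult, (Rabs_right (pX c * Xe)), (Rabs_right (px1 c))
      by nra.
    apply (Rmult_le_reg_r (pX c * Xe)); [nra|].
    unfold Rdiv. rewrite Rmult_assoc, Rinv_l by nra.
    replace (Rabs (pV c) * / Xe * (pX c * Xe)) with (Rabs (pV c) * pX c) by (field; lra).
    pose proof (Rabs_pos (pV c)). nra. }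
  replace (tau * (Rabs (pV c) / (2 * Xe))) with (tau / 2 * (Rabs (pV c) / Xe)) by (field; lra).
  unfold phi1, free; cbn [pX pV px1 pv1 px2 pv2]. fold Xe.
  destruct (Rle_dec 0 (pv1 c)) as [p|p].
  - rewrite (Rabs_right (pv1 c)) by lra.
    replace ((px1 c + tau * pv1 c) / (2 * Xe) - px1 c / (2 * pX c) - tau * (pv1 c / (2 * Xe)))
      with (- (tau / 2) * (px1 c * pV c / (pX c * Xe))) by (unfold Xe in *; field; lra).
    rewrite Rabs_mult, Rabs_Ropp, (Rabs_right (tau / 2)) by lra.
    apply Rmult_le_compat_l; lra.
  - rewrite (Rabs_left (pv1 c)) by lra.
    replace (1 - (px1 c + tau * pv1 c) / (2 * Xe) - (1 - px1 c / (2 * pX c))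
             - tau * (- pv1 c / (2 * Xe)))
      with ((tau / 2) * (px1 c * pV c / (pX c * Xe))) by (unfold Xe in *; field; lra).
    rewrite Rabs_mult, (Rabs_right (tau / 2)) by lra.
    apply Rmult_le_compat_l; lra.
Qed.

Lemma phi2_free_rate tau c : 0 <= tau -> pX c < 1 -> pX c + tau * pV c < 1 ->
  pX c <= px2 c <= 1 ->
  Rabs (phi2 (free tau c) - phi2 c - tau * (Rabs (pv2 c) / (2 * (1 - (pX c + tau * pV c)))))
    <= tau * (Rabs (pV c) / (2 * (1 - (pX c + tau * pV c)))).
Proof.
  intros ht hX hXe hx. set (Xe := pX c + tau * pV c) in *.
  set (Y := 1 - pX c). set (Ye := 1 - Xe). set (y := 1 - px2 c).
  assert (hY : 0 < Y) by (unfold Y; lra). assert (hYe : 0 < Ye) by (unfold Ye; lra).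
  assert (hy : 0 <= y <= Y) by (unfold y, Y; lra).
  assert (key : Rabs (y * pV c / (Y * Ye)) <= Rabs (pV c) / Ye).
  { rewrite Rabs_div by nra. rewrite Rabs_mult, (Rabs_right (Y * Ye)), (Rabs_right y) by nra.
    apply (Rmult_le_reg_r (Y * Ye)); [nra|].
    unfold Rdiv. rewrite Rmult_assoc, Rinv_l by nra.
    replace (Rabs (pV c) * / Ye * (Y * Ye)) with (Rabs (pV c) * Y) by (field; lra).
    pose proof (Rabs_pos (pV c)). nra. }
  unfold phi2, free; cbn [pX pV px1 pv1 px2 pv2]. fold Xe Ye.
  replace (tau * (Rabs (pV c) / (2 * Ye))) with (tau / 2 * (Rabs (pV c) / Ye)) by (field; lra).
  destruct (Rle_dec (pv2 c) 0) as [p|p].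
  - rewrite (Rabs_left1 (pv2 c)) by lra.
    replace ((1 - (px2 c + tau * pv2 c)) / (2 * Ye) - (1 - px2 c) / (2 * (1 - pX c))
             - tau * (- pv2 c / (2 * Ye)))
      with ((tau / 2) * (y * pV c / (Y * Ye))) by (unfold y, Y, Ye, Xe in *; field; lra).
    rewrite Rabs_mult, (Rabs_right (tau / 2)) by lra.
    apply Rmult_le_compat_l; lra.
  - rewrite (Rabs_right (pv2 c)) by lra.
    replace (1 - (1 - (px2 c + tau * pv2 c)) / (2 * Ye) - (1 - (1 - px2 c) / (2 * (1 - pX c)))
             - tau * (pv2 c / (2 * Ye)))
      with (- (tau / 2) * (y * pV c / (Y * Ye))) by (unfold y, Y, Ye, Xe in *; field; lra).
    rewrite Rabs_mult, Rabs_Ropp, (Rabs_right (tau / 2)) by lra.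
    apply Rmult_le_compat_l; lra.
Qed.

(** * The regime before t1 *)

Lemma free_opp tau c : free (- tau) (free tau c) = c.
Proof. destruct c. unfold free; cbn. f_equal; ring. Qed.

Lemma motion_right_free m1 m2 M z s t : is_motion m1 m2 M z -> 0 <= s < t ->
  exists d, 0 < d /\ s + d <= t /\
    forall u, s < u <= s + d -> z u = free (u - s) (coll m1 m2 M (z s)).
Proof.
  intros [Hright _] hs. destruct (Hright s ltac:(lra)) as [d [dp Hd]].
  exists (Rmin d (t - s)). pose proof (Rmin_l d (t - s)); pose proof (Rmin_r d (t - s)).
  assert (0 < Rmin d (t - s)) by (apply Rmin_pos; lra).
  split; [lra|split; [lra|]]. intros u Hu. apply Hd. lra.
Qed.

Lemma motion_left_free m1 m2 M z s : is_motion m1 m2 M z -> 0 < s ->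
  exists d, 0 < d /\ forall u, s - d < u < s -> 0 <= u /\ z u = free (u - s) (z s).
Proof.
  intros [_ Hleft] hs. destruct (Hleft s hs) as [d [dp Hd]].
  exists (Rmin d s). pose proof (Rmin_l d s); pose proof (Rmin_r d s).
  assert (0 < Rmin d s) by (apply Rmin_pos; lra).
  split; [lra|]. intros u Hu. split; [lra|]. apply Hd; lra.
Qed.

Lemma affine_nonneg_near_0 g0 r : 0 <= g0 -> (g0 = 0 -> 0 < r) ->
  exists d, 0 < d /\ forall tau, 0 <= tau <= d -> 0 <= g0 + tau * r.
Proof.
  intros h1 h2. destruct (Req_dec g0 0) as [e|e].
  - specialize (h2 e). exists 1. split; [lra|]. intros. nra.
  - exists (g0 / (Rabs r + 1)). pose proof (Rabs_pos r).
    split; [apply Rdiv_lt_0_compat; lra|].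
    intros tau [ht0 ht]. assert (tau * (Rabs r + 1) <= g0).
    { apply Rmult_le_compat_r with (r := Rabs r + 1) in ht; [|lra].
      replace (g0 / (Rabs r + 1) * (Rabs r + 1)) with g0 in ht by (field; lra). lra. }
    assert (- (tau * Rabs r) <= tau * r) by (unfold Rabs; destruct Rcase_abs; nra).
    nra.
Qed.

Lemma admissible_free_near_0 c : admissible c ->
  (px1 c = 0 -> 0 < pv1 c) -> (px1 c = pX c -> pv1 c < pV c) ->
  (px2 c = pX c -> pV c < pv2 c) -> (px2 c = 1 -> pv2 c < 0) ->
  exists d, 0 < d /\ forall tau, 0 <= tau <= d -> admissible (free tau c).
Proof.
  intros [[a1 a2] [a3 a4]] o1 o2 o3 o4.
  destruct (affine_nonneg_near_0 (px1 c) (pv1 c)) as [d1 [p1 H1]]; [lra|auto|].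
  destruct (affine_nonneg_near_0 (pX c - px1 c) (pV c - pv1 c)) as [d2 [p2 H2]];
    [lra|intros; specialize (o2 ltac:(lra)); lra|].
  destruct (affine_nonneg_near_0 (px2 c - pX c) (pv2 c - pV c)) as [d3 [p3 H3]];
    [lra|intros; specialize (o3 ltac:(lra)); lra|].
  destruct (affine_nonneg_near_0 (1 - px2 c) (- pv2 c)) as [d4 [p4 H4]];
    [lra|intros; specialize (o4 ltac:(lra)); lra|].
  exists (Rmin (Rmin d1 d2) (Rmin d3 d4)).
  pose proof (Rmin_l (Rmin d1 d2) (Rmin d3 d4)); pose proof (Rmin_r (Rmin d1 d2) (Rmin d3 d4)).
  pose proof (Rmin_l d1 d2); pose proof (Rmin_r d1 d2).
  pose proof (Rmin_l d3 d4); pose proof (Rmin_r d3 d4).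
  split; [apply Rmin_pos; apply Rmin_pos; auto|].
  intros tau ht. specialize (H1 tau ltac:(lra)). specialize (H2 tau ltac:(lra)).
  specialize (H3 tau ltac:(lra)). specialize (H4 tau ltac:(lra)).
  unfold admissible, free; cbn [pX pV px1 pv1 px2 pv2]. lra.
Qed.

Definition good_state (aL Wm cmin cmax eps : R) (st : pstate) : Prop :=
  aL <= pX st <= 1 - aL /\ Rabs (pV st) <= eps * Wm /\
  cmin <= Rabs (pv1 st) <= cmax /\ cmin <= Rabs (pv2 st) <= cmax.

Record regime (m1 m2 aL Wm cmin cmax eps : R) (z : R -> pstate) (t1 : R) : Prop := {
  regime_t1 : 0 <= t1;
  regime_good : forall u, 0 <= u <= t1 -> good_state aL Wm cmin cmax eps (z u);
  regime_good_coll : forall s, 0 <= s < t1 ->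
    good_state aL Wm cmin cmax eps (coll m1 m2 (piston_mass eps) (z s));
  regime_admissible : forall u, 0 <= u <= t1 -> admissible (z u);
  regime_off_left_wall : forall s, 0 < s < t1 -> px1 (z s) <> 0 }.

Arguments regime_t1 {m1 m2 aL Wm cmin cmax eps z t1}.
Arguments regime_good {m1 m2 aL Wm cmin cmax eps z t1}.
Arguments regime_good_coll {m1 m2 aL Wm cmin cmax eps z t1}.
Arguments regime_admissible {m1 m2 aL Wm cmin cmax eps z t1}.
Arguments regime_off_left_wall {m1 m2 aL Wm cmin cmax eps z t1}.

Section Regime_propagation.

Variables (m1 m2 aL Wm cmin cmax eps : R) (z : R -> pstate) (t1 : R).
Hypotheses (Hm1 : 0 < m1) (Hm2 : 0 < m2) (HaL : 0 < aL < 1 / 2) (Hc : 0 < cmin <= cmax)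
  (Heps : 0 < eps)
  (Hsmall : eps * Wm + 2 * m1 * eps ^ 2 * (cmax + eps * Wm) < cmin / 4).
Hypotheses (Hmotion : is_motion m1 m2 (piston_mass eps) z) (Ht1 : 0 <= t1)
  (Hadmissible0 : admissible (z 0))
  (Hgood0 : good_state aL Wm cmin cmax eps (z 0))
  (Hgood : forall u, 0 <= u < t1 -> good_state aL Wm cmin cmax eps (z u))
  (Hangle : forall s, 0 < s < t1 -> ~ angle0 (phi1 (z s))).

Lemma good_upto_t1 u : 0 <= u <= t1 -> good_state aL Wm cmin cmax eps (z u).
Proof.
  intros hu. destruct (Req_dec u t1) as [->|]; [|apply Hgood; lra].
  destruct (Req_dec t1 0) as [e0|e0]; [rewrite e0; exact Hgood0|].
  destruct (motion_left_free _ _ _ _ t1 Hmotion ltac:(lra)) as [d [dp Hd]].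
  assert (near : forall u, t1 - d < u < t1 ->
            good_state aL Wm cmin cmax eps (free (u - t1) (z t1))).
  { intros w hw. destruct (Hd w hw) as [hw0 <-]. apply Hgood; lra. }
  destruct (near (t1 - d / 2) ltac:(lra)) as [_ [gv [g1 g2]]].
  cbn [free pV pv1 pv2] in gv, g1, g2.
  split; [split|split; [auto|split; auto]].
  - apply (affine_left_lower_bound t1 d aL (pX (z t1)) (pV (z t1)) dp).
    intros w hw. destruct (near w hw) as [[gx _] _]. cbn [free pX] in gx. lra.
  - apply (affine_left_upper_bound t1 d (1 - aL) (pX (z t1)) (pV (z t1)) dp).
    intros w hw. destruct (near w hw) as [[_ gx] _]. cbn [free pX] in gx. lra.
Qed.

Lemma good_after_coll s : 0 <= s < t1 ->
  good_state aL Wm cmin cmax eps (coll m1 m2 (piston_mass eps) (z s)).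
Proof.
  intros hs. destruct (motion_right_free _ _ _ _ s t1 Hmotion hs) as [d [dp [dt Hd]]].
  destruct (good_upto_t1 (s + d / 2) ltac:(lra)) as [_ [gv [g1 g2]]].
  rewrite (Hd (s + d / 2) ltac:(lra)) in gv, g1, g2. cbn [free pV pv1 pv2] in gv, g1, g2.
  destruct (good_upto_t1 s ltac:(lra)) as [gx _].
  unfold good_state. destruct (coll_positions m1 m2 (piston_mass eps) (z s)) as [-> _].
  tauto.
Qed.

Lemma admissible_upto_t1 u : 0 <= u <= t1 -> admissible (z u).
Proof.
  intros hu. apply (real_induction 0 u (fun u => admissible (z u))); [lra|exact Hadmissible0| |].
  - intros s hs ads.
    destruct (motion_right_free _ _ _ _ s u Hmotion hs) as [d [dp [du Hd]]].
    destruct (good_upto_t1 s ltac:(lra)) as [gx [gv [g1 _]]].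
    destruct (good_after_coll s ltac:(lra)) as [_ [cv [c1 c2]]].
    destruct (coll_positions m1 m2 (piston_mass eps) (z s)) as [p1 [p2 p3]].
    assert (m1 * eps ^ 2 * (Rabs (pv1 (z s)) + Rabs (pV (z s)))
            <= m1 * eps ^ 2 * (cmax + eps * Wm))
      by (apply Rmult_le_compat_l; [assert (0 < eps ^ 2) by (apply pow_lt; lra); nra|lra]).
    assert (0 <= m1 * eps ^ 2 * (Rabs (pv1 (z s)) + Rabs (pV (z s)))).
    { pose proof (Rabs_pos (pv1 (z s))); pose proof (Rabs_pos (pV (z s))).
      apply Rmult_le_pos; [|lra]. assert (0 < eps ^ 2) by (apply pow_lt; lra). nra. }
    destruct (coll_outgoing m1 m2 eps (z s) cmin Hm1 Hm2 Heps ltac:(lra) ltac:(lra)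
                ltac:(lra) ltac:(lra) ltac:(lra) ltac:(lra)) as [o1 [o2 [o3 o4]]].
    set (c := coll m1 m2 (piston_mass eps) (z s)) in *.
    destruct (admissible_free_near_0 c) as [da [dap Ha]];
      [unfold admissible; rewrite p1, p2, p3; exact ads|rewrite ?p1, ?p2, ?p3; auto..].
    exists (Rmin d da). pose proof (Rmin_l d da); pose proof (Rmin_r d da).
    split; [apply Rmin_pos; auto|]. intros w hw _.
    rewrite (Hd w ltac:(lra)). apply Ha. lra.
  - intros s hs Hbelow. destruct (motion_left_free _ _ _ _ s Hmotion ltac:(lra)) as [d [dp Hd]].
    assert (near : forall w, s - d < w < s -> admissible (free (w - s) (z s))).
    { intros w hw. destruct (Hd w hw) as [hw0 <-]. apply Hbelow; lra. }
    unfold admissible. split; split.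
    + apply (affine_left_lower_bound s d 0 (px1 (z s)) (pv1 (z s)) dp). intros w hw.
      destruct (near w hw) as [[h1 h2] [h3 h4]]. cbn [free pX px1 px2] in *. lra.
    + assert (0 <= pX (z s) - px1 (z s)); [|lra].
      apply (affine_left_lower_bound s d 0 _ (pV (z s) - pv1 (z s)) dp). intros w hw.
      destruct (near w hw) as [[h1 h2] [h3 h4]]. cbn [free pX px1 px2] in *. lra.
    + assert (0 <= px2 (z s) - pX (z s)); [|lra].
      apply (affine_left_lower_bound s d 0 _ (pv2 (z s) - pV (z s)) dp). intros w hw.
      destruct (near w hw) as [[h1 h2] [h3 h4]]. cbn [free pX px1 px2] in *. lra.
    + apply (affine_left_upper_bound s d 1 (px2 (z s)) (pv2 (z s)) dp). intros w hw.
      destruct (near w hw) as [[h1 h2] [h3 h4]]. cbn [free pX px1 px2] in *. lra.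
Qed.

Lemma off_left_wall s : 0 < s < t1 -> px1 (z s) <> 0.
Proof.
  intros hs e. apply (Hangle s hs). destruct (Hgood s ltac:(lra)) as [[gx _] _].
  unfold angle0. destruct (phi1_at_wall (z s) e ltac:(lra)) as [-> | ->];
    [apply fp_R0|apply frac_part_1].
Qed.

Lemma regime_intro : regime m1 m2 aL Wm cmin cmax eps z t1.
Proof.
  constructor; [exact Ht1|exact good_upto_t1|exact good_after_coll|exact admissible_upto_t1|
               exact off_left_wall].
Qed.

End Regime_propagation.

(* Quantities indexed by [i : bool] refer to the left particle for [i = true]
   and to the right one for [i = false]. *)
Definition angle (i : bool) : pstate -> R := if i then phi1 else phi2.
Definition chamber (i : bool) (st : pstate) : R := if i then pX st else 1 - pX st.
Definition speed (i : bool) (st : pstate) : R := if i then Rabs (pv1 st) else Rabs (pv2 st).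
Definition angle_rate (i : bool) (st : pstate) : R := speed i st / (2 * chamber i st).
Definition angle_rate_error (i : bool) (st : pstate) : R := Rabs (pV st) / (2 * chamber i st).

Lemma angle_coll_shift i m1 m2 M st : 0 < pX st < 1 ->
  is_int (angle i (coll m1 m2 M st) - angle i st).
Proof.
  intros hX. destruct i; [apply phi1_coll_shift; lra|apply phi2_coll_shift; lra].
Qed.

Lemma angle_free_rate i tau c : 0 <= tau -> 0 < pX c < 1 -> 0 < pX c + tau * pV c < 1 ->
  admissible c ->
  Rabs (angle i (free tau c) - angle i c - tau * angle_rate i (free tau c))
    <= tau * angle_rate_error i (free tau c).
Proof.
  intros ht hX hXe [h1 h2].
  destruct i; unfold angle, angle_rate, angle_rate_error, speed, chamber;
    cbn [free pX pV pv1 pv2].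
  - apply phi1_free_rate; lra.
  - apply phi2_free_rate; lra.
Qed.

Lemma phi1_range st : admissible st -> 0 < pX st -> 0 <= phi1 st <= 1.
Proof.
  intros [[h1 h2] _] hX. unfold phi1.
  assert (0 <= px1 st / (2 * pX st) <= 1 / 2).
  { split; [apply Rmult_le_pos; [lra|left; apply Rinv_0_lt_compat; lra]|].
    apply (Rmult_le_reg_r (2 * pX st)); [lra|].
    unfold Rdiv. rewrite Rmult_assoc, Rinv_l by lra. lra. }
  destruct Rle_dec; lra.
Qed.

Section Regime_estimates.

Variables (m1 m2 aL Wm cmin cmax eps : R) (z : R -> pstate) (t1 : R).
Hypotheses (Hm1 : 0 < m1) (Hm2 : 0 < m2) (HaL : 0 < aL < 1 / 2) (Hc : 0 < cmin <= cmax)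
  (HWm : 1 <= Wm).

(* Bounds on the angular velocities in the good region; [Tmax = 2 / rate_lo]
   bounds [t1] since [phi1] cannot turn by more than 1 between t1/4 and 3t1/4. *)
Definition rate_lo : R := cmin / 4.
Definition rate_hi : R := (cmax + cmin) / (2 * aL).
Definition Tmax : R := 8 / cmin.
(* Piston collisions of one particle are [1 / rate_hi]-separated, so at most
   [1 + rate_hi * Tmax] of them occur before [t1 <= Tmax]; [n_turns] adds room
   for a jump at time 0 and one unit of slack. *)
Definition n_turns : R := 3 + rate_hi * Tmax.

Definition K_X : R := Wm * Tmax.
Definition K_s1 : R := (2 * m1 * cmax + 2 * Wm) * n_turns.
Definition K_s2 : R := (2 * m2 * cmax + 2 * (Wm + 2 * m1 * (cmax + Wm))) * n_turns.
Definition K_momentum : R := 2 * m1 * cmax + 2 * m2 * cmax * n_turns.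
Definition K_W : R := K_momentum + 2 * m1 * cmax + 2 * m2 * cmax.
Definition K_rate : R := (K_s1 + K_s2 + cmax * K_X) / (2 * aL ^ 2) + Wm / (2 * aL).
Definition K_angle : R := K_rate * Tmax.
Definition zdist_const : R := K_X + K_W + K_s1 + K_s2 + K_angle + 1.

Lemma rate_hi_pos : 0 < rate_hi.
Proof. unfold rate_hi. apply Rdiv_lt_0_compat; lra. Qed.

Lemma Tmax_pos : 0 < Tmax.
Proof. unfold Tmax. apply Rdiv_lt_0_compat; lra. Qed.

Lemma constants_nonneg :
  0 <= K_X /\ 0 <= K_W /\ 0 <= K_s1 /\ 0 <= K_s2 /\ 0 <= K_rate /\ 0 <= K_angle.
Proof.
  pose proof rate_hi_pos; pose proof Tmax_pos.
  assert (nn : 0 < n_turns) by (unfold n_turns; nra).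
  assert (0 <= m1 * cmax) by nra. assert (0 <= m2 * cmax) by nra.
  assert (kX : 0 <= K_X) by (unfold K_X; nra).
  assert (k1 : 0 <= K_s1) by (unfold K_s1; apply Rmult_le_pos; lra).
  assert (k2 : 0 <= K_s2) by (unfold K_s2; apply Rmult_le_pos; nra).
  assert (kr : 0 <= K_rate).
  { unfold K_rate. apply Rplus_le_le_0_compat; apply Rmult_le_pos; try nra;
      left; apply Rinv_0_lt_compat; nra. }
  repeat split; auto; [unfold K_W, K_momentum; nra|unfold K_angle; nra].
Qed.

Lemma zdist_const_pos : 0 < zdist_const.
Proof.
  destruct constants_nonneg as [? [? [? [? [? ?]]]]]. unfold zdist_const. lra.
Qed.

Hypotheses (Heps : 0 < eps <= 1)
  (Hsmall : eps * Wm + 2 * m1 * eps ^ 2 * (cmax + eps * Wm) < cmin / 4).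
Hypotheses (Hmotion : is_motion m1 m2 (piston_mass eps) z)
  (reg : regime m1 m2 aL Wm cmin cmax eps z t1).

Lemma piston_slow : eps * Wm < cmin / 4.
Proof.
  assert (0 < eps ^ 2) by (apply pow_lt; lra).
  assert (0 <= 2 * m1 * eps ^ 2 * (cmax + eps * Wm)) by (apply Rmult_le_pos; nra). lra.
Qed.

Lemma angle_free_right i s : 0 <= s < t1 ->
  exists d, 0 < d /\ s + d <= t1 /\ forall u, s < u <= s + d ->
    Rabs (angle i (z u) - angle i (coll m1 m2 (piston_mass eps) (z s))
          - (u - s) * angle_rate i (z u)) <= (u - s) * angle_rate_error i (z u).
Proof.
  intros hs. destruct (motion_right_free _ _ _ _ s t1 Hmotion hs) as [d [dp [dt Hd]]].
  exists d. split; [exact dp|]. split; [exact dt|]. intros u hu.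
  destruct (regime_good reg u ltac:(lra)) as [gu _].
  destruct (regime_good reg s ltac:(lra)) as [gs _].
  pose proof (regime_admissible reg s ltac:(lra)) as ads.
  destruct (coll_positions m1 m2 (piston_mass eps) (z s)) as [p1 [p2 p3]].
  rewrite (Hd u hu) in gu |- *. cbn [free pX] in gu.
  apply angle_free_rate; [lra|lra|lra|]. unfold admissible; rewrite p1, p2, p3; exact ads.
Qed.

Lemma angle_free_left i s : 0 < s <= t1 ->
  exists d, 0 < d /\ forall u, s - d < u < s -> 0 <= u /\
    Rabs (angle i (z s) - angle i (z u) - (s - u) * angle_rate i (z s))
      <= (s - u) * angle_rate_error i (z s).
Proof.
  intros hs. destruct (motion_left_free _ _ _ _ s Hmotion ltac:(lra)) as [d [dp Hd]].
  exists d. split; [exact dp|]. intros u hu. destruct (Hd u hu) as [hu0 zu].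
  split; [exact hu0|].
  assert (zs : z s = free (s - u) (z u)).
  { replace (s - u) with (- (u - s)) by ring. now rewrite zu, free_opp. }
  destruct (regime_good reg u ltac:(lra)) as [gu _].
  destruct (regime_good reg s ltac:(lra)) as [gs _].
  rewrite zs in gs |- *. cbn [free pX] in gs.
  apply angle_free_rate; [lra|lra|lra|]. apply (regime_admissible reg); lra.
Qed.

Lemma angle_increment i a b w L (Pk : R -> Prop) : 0 <= a <= b -> b <= t1 ->
  Pk 0 -> (forall x y, Pk x -> Pk y -> Pk (x + y)) ->
  (forall s, a <= s < b -> Pk (angle i (coll m1 m2 (piston_mass eps) (z s)) - angle i (z s))) ->
  (forall u, a <= u <= b -> Rabs (angle_rate i (z u) - w) + angle_rate_error i (z u) <= L) ->
  exists k, Pk k /\ Rabs (angle i (z b) - angle i (z a) - k - w * (b - a)) <= L * (b - a).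
Proof.
  intros hab hb P0 Padd Hjump Hrate.
  apply (increment_up_to_jumps a b w L (fun u => angle i (z u)) Pk P0 Padd ltac:(lra)).
  - intros s hs. destruct (angle_free_right i s ltac:(lra)) as [d [dp [_ Hd]]].
    set (k := angle i (coll m1 m2 (piston_mass eps) (z s)) - angle i (z s)).
    exists (Rmin d (b - s)), k. pose proof (Rmin_l d (b - s)); pose proof (Rmin_r d (b - s)).
    split; [apply Rmin_pos; lra|]. split; [apply Hjump; lra|]. intros u hu.
    replace (angle i (z u) - angle i (z s) - k - w * (u - s))
      with (angle i (z u) - angle i (coll m1 m2 (piston_mass eps) (z s)) - w * (u - s))
      by (unfold k; ring).
    apply (affine_rate_deviation _ _ (angle_rate i (z u)) (angle_rate_error i (z u)));
      [lra|apply Hd; lra|apply Hrate; lra].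
  - intros s hs. destruct (angle_free_left i s ltac:(lra)) as [d [dp Hd]].
    exists d. split; [exact dp|]. intros u hu. destruct (Hd u hu) as [_ H].
    apply (affine_rate_deviation _ _ (angle_rate i (z s)) (angle_rate_error i (z s)));
      [lra|exact H|apply Hrate; lra].
Qed.

Lemma angle_rate_within i u : 0 <= u <= t1 ->
  Rabs (angle_rate i (z u) - (rate_lo + rate_hi) / 2) + angle_rate_error i (z u)
    <= (rate_hi - rate_lo) / 2.
Proof.
  intros hu. destruct (regime_good reg u hu) as [gx [gv [g1 g2]]].
  pose proof piston_slow. pose proof (Rabs_pos (pV (z u))).
  assert (hX : aL <= chamber i (z u) <= 1) by (destruct i; cbn; lra).
  assert (hs : cmin <= speed i (z u) <= cmax) by (destruct i; cbn; lra).
  unfold angle_rate, angle_rate_error, rate_lo, rate_hi.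
  set (X := chamber i (z u)) in *. set (v := speed i (z u)) in *.
  assert (lo : cmin / 4 <= v / (2 * X) - Rabs (pV (z u)) / (2 * X)).
  { replace (v / (2 * X) - Rabs (pV (z u)) / (2 * X)) with ((v - Rabs (pV (z u))) / (2 * X))
      by (field; lra).
    apply Rle_trans with ((v - Rabs (pV (z u))) / 2); [lra|].
    unfold Rdiv. apply Rmult_le_compat_l; [lra|]. apply Rinv_le_contravar; lra. }
  assert (hi : v / (2 * X) + Rabs (pV (z u)) / (2 * X) <= (cmax + cmin) / (2 * aL)).
  { replace (v / (2 * X) + Rabs (pV (z u)) / (2 * X)) with ((v + Rabs (pV (z u))) / (2 * X))
      by (field; lra).
    apply Rle_trans with ((v + Rabs (pV (z u))) / (2 * aL)); unfold Rdiv.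
    - apply Rmult_le_compat_l; [lra|]. apply Rinv_le_contravar; lra.
    - apply Rmult_le_compat_r; [left; apply Rinv_0_lt_compat|]; lra. }
  unfold Rabs at 1; destruct Rcase_abs; lra.
Qed.

Lemma t1_le_Tmax : t1 <= Tmax.
Proof.
  pose proof (regime_t1 reg). unfold Tmax.
  destruct (Req_dec t1 0) as [->|nz]; [apply Rlt_le, Rdiv_lt_0_compat; lra|].
  destruct (angle_increment true (t1 / 4) (3 * t1 / 4) ((rate_lo + rate_hi) / 2)
              ((rate_hi - rate_lo) / 2) (fun k => k = 0) ltac:(lra) ltac:(lra) eq_refl)
    as [k [-> Hk]].
  - intros x y -> ->; ring.
  - intros s hs. destruct (regime_good reg s ltac:(lra)) as [[gx _] _].
    cbn [angle]. rewrite (proj2 (phi1_coll_shift m1 m2 (piston_mass eps) (z s) ltac:(lra)));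
      [ring|apply (regime_off_left_wall reg); lra].
  - intros u hu. apply angle_rate_within; lra.
  - destruct (regime_good reg (t1 / 4) ltac:(lra)) as [[ga _] _].
    destruct (regime_good reg (3 * t1 / 4) ltac:(lra)) as [[gb _] _].
    pose proof (phi1_range _ (regime_admissible reg (t1 / 4) ltac:(lra)) ltac:(lra)).
    pose proof (phi1_range _ (regime_admissible reg (3 * t1 / 4) ltac:(lra)) ltac:(lra)).
    cbn [angle] in Hk. unfold rate_lo in Hk.
    apply (Rmult_le_reg_r (cmin / 8)); [lra|].
    replace (8 / cmin * (cmin / 8)) with 1 by (field; lra).
    unfold Rabs in Hk; destruct Rcase_abs in Hk; lra.
Qed.

Lemma integer_turn_time i c c' : 0 <= c < c' -> c' <= t1 ->
  is_int (angle i (z c') - angle i (z c)) -> c + / rate_hi <= c'.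
Proof.
  intros hc hc' [n hn]. pose proof rate_hi_pos.
  destruct (angle_increment i c c' ((rate_lo + rate_hi) / 2) ((rate_hi - rate_lo) / 2) is_int
              ltac:(lra) ltac:(lra) is_int_0 is_int_add) as [k [[m ->] Hk]].
  - intros s hs. destruct (regime_good reg s ltac:(lra)) as [gx _].
    apply angle_coll_shift; lra.
  - intros u hu. apply angle_rate_within; lra.
  - rewrite hn, <- minus_IZR in Hk. set (q := (n - m)%Z) in *.
    assert (lo : 0 < rate_lo) by (unfold rate_lo; lra).
    assert (q1 : rate_lo * (c' - c) <= IZR q <= rate_hi * (c' - c))
      by (unfold Rabs in Hk; destruct Rcase_abs in Hk; split; nra).
    assert (q0 : (0 < q)%Z) by (apply lt_0_IZR; nra).
    assert (q2 : 1 <= IZR q) by (apply IZR_le; lia).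
    apply (Rmult_le_reg_l rate_hi); [lra|].
    rewrite Rmult_plus_distr_l, Rinv_r by lra. nra.
Qed.

Lemma invariant_drift (f : pstate -> R) (onset : pstate -> Prop) (J0 J t : R) :
  0 <= J0 -> 0 <= J -> 0 <= t <= t1 ->
  (forall tau c, f (free tau c) = f c) ->
  (forall c c', 0 < c -> c < c' -> c' < t -> onset (z c) -> onset (z c') -> c + / rate_hi <= c') ->
  (forall s, 0 <= s < t ->
     let j := Rabs (f (coll m1 m2 (piston_mass eps) (z s)) - f (z s)) in
     j = 0 \/ (s = 0 /\ j <= J0) \/ (0 < s /\ onset (z s) /\ j <= J)) ->
  Rabs (f (z t) - f (z 0)) <= J0 + J * (2 + rate_hi * t).
Proof.
  intros hJ0 hJ ht hfree hsep hjump.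
  replace (J0 + J * (2 + rate_hi * t))
    with (0 * (t - 0) + J0 + J * (2 + rate_hi * (t - 0))) by ring.
  apply (increment_with_jumps_le 0 t 0 J0 J rate_hi (fun u => f (z u)) (fun s => onset (z s))
           ltac:(lra) ltac:(lra) hJ0 hJ rate_hi_pos hsep).
  - intros s hs. destruct (motion_right_free _ _ _ _ s t Hmotion hs) as [d [dp [_ Hd]]].
    exists d, (Rabs (f (coll m1 m2 (piston_mass eps) (z s)) - f (z s))).
    split; [exact dp|]. split; [apply Rabs_pos|]. split; [exact (hjump s hs)|].
    intros u hu. rewrite (Hd u hu), hfree. lra.
  - intros s hs. destruct (motion_left_free _ _ _ _ s Hmotion ltac:(lra)) as [d [dp Hd]].
    exists d. split; [exact dp|]. intros u hu. destruct (Hd u hu) as [_ ->].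
    rewrite hfree, Rminus_diag, Rabs_R0. lra.
Qed.

Lemma jumps_total_le J b t : 0 <= J <= b -> 0 <= t <= t1 ->
  J + J * (2 + rate_hi * t) <= b * n_turns.
Proof.
  intros hJ ht. pose proof rate_hi_pos. pose proof t1_le_Tmax.
  assert (rate_hi * t <= rate_hi * Tmax) by (apply Rmult_le_compat_l; lra).
  assert (J * (rate_hi * t) <= b * (rate_hi * Tmax))
    by (apply Rmult_le_compat; nra).
  unfold n_turns. nra.
Qed.

Lemma X_drift t : 0 <= t <= t1 -> Rabs (pX (z t) - pX (z 0)) <= eps * K_X.
Proof.
  intros ht. pose proof t1_le_Tmax.
  apply Rle_trans with (eps * Wm * (t - 0) + 0 + 0 * (2 + 1 * (t - 0))).
  2: { unfold K_X. assert (0 <= eps * Wm) by nra.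
       assert (eps * Wm * t <= eps * Wm * Tmax) by (apply Rmult_le_compat_l; lra). nra. }
  apply (increment_with_jumps_le 0 t (eps * Wm) 0 0 1 (fun u => pX (z u)) (fun _ => False));
    [lra|nra|lra|lra|lra|tauto| |].
  - intros s hs. destruct (motion_right_free _ _ _ _ s t Hmotion hs) as [d [dp [_ Hd]]].
    exists d, 0. split; [exact dp|]. split; [lra|]. split; [now left|].
    intros u hu. rewrite (Hd u hu).
    destruct (regime_good_coll reg s ltac:(lra)) as [_ [gv _]].
    cbn [free pX]. rewrite (proj1 (coll_positions m1 m2 (piston_mass eps) (z s))).
    replace (pX (z s) + (u - s) * pV (coll m1 m2 (piston_mass eps) (z s)) - pX (z s))
      with ((u - s) * pV (coll m1 m2 (piston_mass eps) (z s))) by ring.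
    rewrite Rabs_mult, (Rabs_right (u - s)) by lra. nra.
  - intros s hs. destruct (motion_left_free _ _ _ _ s Hmotion ltac:(lra)) as [d [dp Hd]].
    exists d. split; [exact dp|]. intros u hu. destruct (Hd u hu) as [_ ->].
    destruct (regime_good reg s ltac:(lra)) as [_ [gv _]].
    cbn [free pX]. replace (pX (z s) - (pX (z s) + (u - s) * pV (z s))) with ((s - u) * pV (z s))
      by ring.
    rewrite Rabs_mult, (Rabs_right (s - u)) by lra. nra.
Qed.

Lemma eps_sq_le : 0 <= eps ^ 2 <= eps.
Proof. simpl. nra. Qed.

Lemma speed1_drift t : 0 <= t <= t1 ->
  Rabs (Rabs (pv1 (z t)) - Rabs (pv1 (z 0))) <= eps * K_s1.
Proof.
  intros ht. pose proof eps_sq_le.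
  set (J := 2 * m1 * eps ^ 2 * cmax + 2 * (eps * Wm)).
  assert (0 <= m1 * cmax) by nra.
  assert (m1 * cmax * eps ^ 2 <= m1 * cmax * eps) by (apply Rmult_le_compat_l; lra).
  assert (0 <= m1 * cmax * eps ^ 2) by (apply Rmult_le_pos; lra).
  assert (hJ : 0 <= J <= eps * (2 * m1 * cmax + 2 * Wm)) by (unfold J; split; nra).
  apply Rle_trans with (J + J * (2 + rate_hi * t)).
  2: { unfold K_s1. rewrite <- Rmult_assoc. exact (jumps_total_le J _ t hJ ht). }
  apply (invariant_drift (fun st => Rabs (pv1 st)) (fun st => px1 st = pX st)); try lra.
  - reflexivity.
  - intros c c' hc hcc' hc' e e'. apply (integer_turn_time true); [lra|lra|].
    destruct (regime_good reg c ltac:(lra)) as [[gc _] _].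
    destruct (regime_good reg c' ltac:(lra)) as [[gc' _] _].
    cbn [angle]. rewrite (phi1_at_piston _ e), (phi1_at_piston _ e') by lra.
    exists 0%Z. simpl; ring.
  - intros s hs. cbv zeta. destruct (regime_good reg s ltac:(lra)) as [gx [gv [g1 _]]].
    destruct (Req_dec (px1 (z s)) (pX (z s))) as [e|e].
    + assert (Rabs (Rabs (pv1 (coll m1 m2 (piston_mass eps) (z s))) - Rabs (pv1 (z s))) <= J).
      { eapply Rle_trans; [apply coll_speed1_jump; lra|]. unfold J.
        assert (m1 * eps ^ 2 * Rabs (pv1 (z s)) <= m1 * eps ^ 2 * cmax)
          by (apply Rmult_le_compat_l; nra). lra. }
      right. destruct (Req_dec s 0); [left|right]; repeat split; auto; lra.
    + left. rewrite coll_speed1_off_piston, Rminus_diag by lra. apply Rabs_R0.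
Qed.

Lemma speed2_drift t : 0 <= t <= t1 ->
  Rabs (Rabs (pv2 (z t)) - Rabs (pv2 (z 0))) <= eps * K_s2.
Proof.
  intros ht. pose proof eps_sq_le.
  set (J := 2 * m2 * eps ^ 2 * cmax + 2 * (eps * Wm + 2 * m1 * eps ^ 2 * (cmax + eps * Wm))).
  assert (hJ : 0 <= J <= eps * (2 * m2 * cmax + 2 * (Wm + 2 * m1 * (cmax + Wm)))).
  { assert (eps * Wm <= Wm) by nra.
    assert (ha : 0 <= eps ^ 2 * (cmax + eps * Wm) <= eps * (cmax + Wm))
      by (split; [apply Rmult_le_pos|apply Rmult_le_compat]; nra).
    assert (m1 * (eps ^ 2 * (cmax + eps * Wm)) <= m1 * (eps * (cmax + Wm)))
      by (apply Rmult_le_compat_l; lra).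
    assert (0 <= m1 * (eps ^ 2 * (cmax + eps * Wm))) by (apply Rmult_le_pos; lra).
    assert (0 <= m2 * cmax) by nra.
    assert (m2 * cmax * eps ^ 2 <= m2 * cmax * eps) by (apply Rmult_le_compat_l; lra).
    assert (0 <= m2 * cmax * eps ^ 2) by (apply Rmult_le_pos; lra).
    unfold J; split; nra. }
  apply Rle_trans with (J + J * (2 + rate_hi * t)).
  2: { unfold K_s2. rewrite <- Rmult_assoc. exact (jumps_total_le J _ t hJ ht). }
  apply (invariant_drift (fun st => Rabs (pv2 st)) (fun st => px2 st = pX st)); try lra.
  - reflexivity.
  - intros c c' hc hcc' hc' e e'. apply (integer_turn_time false); [lra|lra|].
    destruct (regime_good reg c ltac:(lra)) as [[_ gc] _].
    destruct (regime_good reg c' ltac:(lra)) as [[_ gc'] _].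
    cbn [angle]. rewrite (phi2_at_piston _ e), (phi2_at_piston _ e') by lra.
    exists 0%Z. simpl; ring.
  - intros s hs. cbv zeta. destruct (regime_good reg s ltac:(lra)) as [gx [gv [g1 g2]]].
    destruct (Req_dec (px2 (z s)) (pX (z s))) as [e|e].
    + assert (Rabs (Rabs (pv2 (coll m1 m2 (piston_mass eps) (z s))) - Rabs (pv2 (z s))) <= J).
      { eapply Rle_trans; [apply coll_speed2_jump; lra|]. unfold J.
        assert (m2 * eps ^ 2 * Rabs (pv2 (z s)) <= m2 * eps ^ 2 * cmax)
          by (apply Rmult_le_compat_l; nra).
        assert (m1 * eps ^ 2 * (Rabs (pv1 (z s)) + Rabs (pV (z s)))
                <= m1 * eps ^ 2 * (cmax + eps * Wm))
          by (apply Rmult_le_compat_l; nra). lra. }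
      right. destruct (Req_dec s 0); [left|right]; repeat split; auto; lra.
    + left. rewrite coll_speed2_off_piston, Rminus_diag by lra. apply Rabs_R0.
Qed.

(* Piston collisions conserve the scaled momentum; the left wall is hit at time 0 at most. *)
Lemma momentum_drift t : 0 <= t <= t1 ->
  Rabs (scaled_momentum eps m1 m2 (z t) - scaled_momentum eps m1 m2 (z 0)) <= eps * K_momentum.
Proof.
  intros ht.
  set (J0 := 2 * eps * m1 * cmax + 2 * eps * m2 * cmax). set (J := 2 * eps * m2 * cmax).
  assert (0 <= eps * m2 * cmax) by (apply Rmult_le_pos; nra).
  assert (0 <= eps * m1 * cmax) by (apply Rmult_le_pos; nra).
  assert (hJ : 0 <= J <= eps * (2 * m2 * cmax)) by (unfold J; split; lra).
  apply Rle_trans with (J0 + J * (2 + rate_hi * t)).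
  2: { pose proof (jumps_total_le J _ t hJ ht). unfold K_momentum, J0, J in *. lra. }
  apply (invariant_drift (scaled_momentum eps m1 m2) (fun st => px2 st = 1));
    [unfold J0; nra|lra|lra|reflexivity| |].
  - intros c c' hc hcc' hc' e e'. apply (integer_turn_time false); [lra|lra|].
    destruct (regime_good reg c ltac:(lra)) as [[_ gc] _].
    destruct (regime_good reg c' ltac:(lra)) as [[_ gc'] _].
    apply is_int_sub_0_1; apply phi2_at_wall; lra.
  - intros s hs. cbv zeta. destruct (regime_good reg s ltac:(lra)) as [gx [gv [g1 g2]]].
    destruct (coll_scaled_momentum m1 m2 eps (z s) Hm1 Hm2 ltac:(lra) ltac:(lra))
      as [q0 [q1 q2]].
    assert (2 * eps * m1 * Rabs (pv1 (z s)) <= 2 * eps * m1 * cmax)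
      by (apply Rmult_le_compat_l; nra).
    assert (2 * eps * m2 * Rabs (pv2 (z s)) <= 2 * eps * m2 * cmax)
      by (apply Rmult_le_compat_l; nra).
    destruct (Req_dec s 0) as [s0|s0]; [right; left; split; [exact s0|unfold J0; lra]|].
    assert (nz : px1 (z s) <> 0) by (apply (regime_off_left_wall reg); lra).
    destruct (Req_dec (px2 (z s)) 1) as [e|e].
    + right; right. split; [lra|]. split; [exact e|]. specialize (q1 nz). unfold J; lra.
    + left. rewrite (q2 nz e). apply Rabs_R0.
Qed.

Lemma W_drift t : 0 <= t <= t1 -> Rabs (pV (z t) / eps - pV (z 0) / eps) <= eps * K_W.
Proof.
  intros ht. pose proof (momentum_drift t ht) as HQ. unfold scaled_momentum in HQ.
  destruct (regime_good reg t ht) as [_ [_ [a1 a2]]].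
  destruct (regime_good reg 0 ltac:(lra)) as [_ [_ [b1 b2]]].
  replace (pV (z t) / eps - pV (z 0) / eps) with
    ((pV (z t) / eps + eps * (m1 * pv1 (z t) + m2 * pv2 (z t))
      - (pV (z 0) / eps + eps * (m1 * pv1 (z 0) + m2 * pv2 (z 0))))
     - eps * m1 * (pv1 (z t) - pv1 (z 0)) - eps * m2 * (pv2 (z t) - pv2 (z 0))) by ring.
  assert (v1 : Rabs (pv1 (z t) - pv1 (z 0)) <= 2 * cmax).
  { unfold Rminus. eapply Rle_trans; [apply Rabs_triang|]. rewrite Rabs_Ropp. lra. }
  assert (v2 : Rabs (pv2 (z t) - pv2 (z 0)) <= 2 * cmax).
  { unfold Rminus. eapply Rle_trans; [apply Rabs_triang|]. rewrite Rabs_Ropp. lra. }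
  assert (Rabs (eps * m1 * (pv1 (z t) - pv1 (z 0))) <= eps * (2 * m1 * cmax)).
  { rewrite Rabs_mult, (Rabs_right (eps * m1)) by nra. assert (0 < eps * m1) by nra. nra. }
  assert (Rabs (eps * m2 * (pv2 (z t) - pv2 (z 0))) <= eps * (2 * m2 * cmax)).
  { rewrite Rabs_mult, (Rabs_right (eps * m2)) by nra. assert (0 < eps * m2) by nra. nra. }
  unfold K_W. unfold Rminus at 1 2.
  eapply Rle_trans; [apply Rabs_triang|]. rewrite Rabs_Ropp.
  eapply Rle_trans; [apply Rplus_le_compat_r; apply Rabs_triang|]. rewrite Rabs_Ropp. lra.
Qed.

Lemma angle_rate_drift i u : 0 <= u <= t1 ->
  Rabs (angle_rate i (z u) - angle_rate i (z 0)) + angle_rate_error i (z u) <= eps * K_rate.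
Proof.
  intros hu. destruct constants_nonneg as [kX [_ [k1 [k2 _]]]].
  destruct (regime_good reg u hu) as [gx [gv [g1 g2]]].
  destruct (regime_good reg 0 ltac:(lra)) as [hx [hv [h1 h2]]].
  assert (ds : Rabs (speed i (z u) - speed i (z 0)) <= eps * (K_s1 + K_s2)).
  { destruct i; cbn [speed];
      [pose proof (speed1_drift u hu)|pose proof (speed2_drift u hu)]; nra. }
  assert (dX : Rabs (chamber i (z u) - chamber i (z 0)) <= eps * K_X).
  { pose proof (X_drift u hu). destruct i; cbn [chamber]; [lra|].
    replace (1 - pX (z u) - (1 - pX (z 0))) with (- (pX (z u) - pX (z 0))) by ring.
    now rewrite Rabs_Ropp. }
  assert (hX : aL <= chamber i (z u) /\ aL <= chamber i (z 0) <= 1)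
    by (destruct i; cbn [chamber]; lra).
  assert (hs : 0 <= speed i (z 0) <= cmax) by (destruct i; cbn [speed]; lra).
  assert (err : angle_rate_error i (z u) <= eps * (Wm / (2 * aL))).
  { unfold angle_rate_error. replace (eps * (Wm / (2 * aL))) with (eps * Wm / (2 * aL))
      by (field; lra).
    apply Rle_trans with (Rabs (pV (z u)) / (2 * aL)); unfold Rdiv.
    - apply Rmult_le_compat_l; [apply Rabs_pos|]. apply Rinv_le_contravar; lra.
    - apply Rmult_le_compat_r; [left; apply Rinv_0_lt_compat|]; lra. }
  assert (rate : Rabs (angle_rate i (z u) - angle_rate i (z 0))
                 <= eps * ((K_s1 + K_s2 + cmax * K_X) / (2 * aL ^ 2))).
  { unfold angle_rate. eapply Rle_trans; [apply (ratio_sub_le aL cmax); lra|].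
    replace (eps * ((K_s1 + K_s2 + cmax * K_X) / (2 * aL ^ 2)))
      with ((eps * (K_s1 + K_s2) + cmax * (eps * K_X)) / (2 * aL ^ 2)) by (field; lra).
    unfold Rdiv. apply Rmult_le_compat_r; [left; apply Rinv_0_lt_compat; nra|].
    assert (cmax * Rabs (chamber i (z u) - chamber i (z 0)) <= cmax * (eps * K_X))
      by (apply Rmult_le_compat_l; lra).
    lra. }
  unfold K_rate. lra.
Qed.

Lemma angle_drift i t : 0 <= t <= t1 ->
  dcirc (angle i (z t)) (angle i (z 0) + angle_rate i (z 0) * t) <= eps * K_angle.
Proof.
  intros ht. pose proof t1_le_Tmax. destruct constants_nonneg as [_ [_ [_ [_ [kr _]]]]].
  destruct (angle_increment i 0 t (angle_rate i (z 0)) (eps * K_rate) is_int ltac:(lra) ltac:(lra)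
              is_int_0 is_int_add) as [k [[n ->] Hk]].
  - intros s hs. destruct (regime_good reg s ltac:(lra)) as [gx _].
    apply angle_coll_shift; lra.
  - intros u hu. apply angle_rate_drift; lra.
  - eapply Rle_trans; [apply (dcirc_le_sub_int _ _ n)|].
    replace (angle i (z t) - (angle i (z 0) + angle_rate i (z 0) * t) - IZR n)
      with (angle i (z t) - angle i (z 0) - IZR n - angle_rate i (z 0) * (t - 0)) by ring.
    eapply Rle_trans; [exact Hk|]. unfold K_angle.
    assert (0 <= eps * K_rate) by nra.
    rewrite Rminus_0_r, <- Rmult_assoc. apply Rmult_le_compat_l; lra.
Qed.

Lemma zdist_le t : 0 <= t <= t1 -> zdist eps (z 0) t (z t) <= zdist_const * eps.
Proof.
  intros ht. destruct constants_nonneg as [kX [kW [k1 [k2 [kr ka]]]]].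
  pose proof (X_drift t ht). pose proof (W_drift t ht).
  pose proof (speed1_drift t ht). pose proof (speed2_drift t ht).
  pose proof (angle_drift true t ht) as P1. pose proof (angle_drift false t ht) as P2.
  unfold angle, angle_rate, speed, chamber in P1, P2.
  assert (0 <= eps * K_X /\ 0 <= eps * K_W /\ 0 <= eps * K_s1 /\ 0 <= eps * K_s2 /\
          0 <= eps * K_angle) by (repeat split; apply Rmult_le_pos; lra).
  unfold zdist, hstate, hX, hW, hs1, hs2; cbn [fst snd]. unfold zdist_const.
  repeat apply Rmax_lub; lra.
Qed.

End Regime_estimates.

Module CompactBounds.
From mathcomp Require Import all_boot all_classical Rstruct Rstruct_topology topology derive.
Local Open Scope classical_set_scope.

Lemma compactR_min_max (A : R -> Prop) : compactR A -> (exists x, A x) ->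
  exists lo hi, A lo /\ A hi /\ forall x, A x -> Rle lo x /\ Rle x hi.
Proof.
move=> cA [x0 Ax0].
have A0 : A !=set0 by exists x0.
have cid : {within A, continuous (fun x : R => x)}.
  by apply: continuous_subspaceT => x; exact: cvg_id.
have [c cA' cmin] := compact_EVT_min A0 cA cid.
have [d dA' dmax] := compact_EVT_max A0 cA cid.
exists c, d; rewrite inE in cA'; rewrite inE in dA'; split => //; split => // x Ax.
have xA : x \in (A : set R) by rewrite inE.
by split; apply/RleP; [exact: cmin | exact: dmax].
Qed.
End CompactBounds.

Lemma Glb_Rbar_le_mem (E : R -> Prop) x : E x -> Rbar_le (Glb_Rbar E) (Finite x).
Proof. intros Ex. apply (proj1 (Glb_Rbar_correct E)), Ex. Qed.

Lemma Glb_Rbar_ge (E : R -> Prop) m : (forall x, E x -> m <= x) -> Rbar_le (Finite m) (Glb_Rbar E).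
Proof. intros H. apply (proj2 (Glb_Rbar_correct E)). intros x Ex. apply H, Ex. Qed.

Lemma t1_eps_spec eps (Vs : slow -> Prop) (hbar : R -> slow) z T : 0 < eps -> 0 < T ->
  Rbar_le (t1_eps z) (Rbar_mult (Rbar_min (Finite T) (T_eps eps Vs hbar z)) (Finite (/ eps))) ->
  exists t1, t1_eps z = Finite t1 /\ 0 <= t1 /\
    (forall u, 0 <= u < t1 -> Vs (hstate eps (z u))) /\
    (forall s, 0 < s < t1 -> ~ angle0 (phi1 (z s))).
Proof.
  intros he hT H.
  assert (t1_ge0 : Rbar_le (Finite 0) (t1_eps z)) by (apply Glb_Rbar_ge; intros x [hx _]; lra).
  assert (T_ge0 : Rbar_le (Finite 0) (T_eps eps Vs hbar z))
    by (apply Glb_Rbar_ge; intros x [hx _]; lra).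
  assert (exit : forall tau, 0 <= tau -> ~ Vs (hstate eps (z (tau / eps))) ->
            Rbar_le (T_eps eps Vs hbar z) (Finite tau))
    by (intros tau h0 h1; apply Glb_Rbar_le_mem; split; [exact h0|right; exact h1]).
  assert (bound : exists B, Rbar_le (t1_eps z) (Finite B) /\
     forall tau, 0 <= tau -> ~ Vs (hstate eps (z (tau / eps))) -> B <= tau / eps).
  { destruct (T_eps eps Vs hbar z) as [te| |] eqn:eT; simpl in H, T_ge0.
    - exists (Rmin T te * / eps). split; [exact H|]. intros tau h0 h1.
      specialize (exit tau h0 h1). simpl in exit.
      pose proof (Rmin_r T te). unfold Rdiv.
      apply Rmult_le_compat_r; [left; apply Rinv_0_lt_compat|]; lra.
    - exists (T * / eps). split; [exact H|]. intros tau h0 h1.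
      specialize (exit tau h0 h1). contradiction.
    - contradiction. }
  destruct bound as [B [hB exitB]].
  destruct (t1_eps z) as [t1| |] eqn:et; simpl in hB, t1_ge0; try contradiction.
  exists t1. split; [reflexivity|]. split; [exact t1_ge0|]. split.
  - intros u hu. apply NNPP; intros nV.
    assert (B <= u * eps / eps)
      by (apply exitB; [nra|now replace (u * eps / eps) with u by (field; lra)]).
    replace (u * eps / eps) with u in * by (field; lra). lra.
  - intros s hs ha. assert (Rbar_le (t1_eps z) (Finite s))
      by (apply Glb_Rbar_le_mem; split; [lra|exact ha]).
    rewrite et in H0. simpl in H0. lra.
Qed.

Lemma slow_region_bounds (A B C : R -> Prop) (Vs : slow -> Prop) :
  compactR A -> compactR B -> compactR C ->
  (forall x, A x -> 0 < x < 1) -> (forall x, C x -> 0 < x) ->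
  (forall h, Vs h -> A (hX h) /\ B (hW h) /\ C (hs1 h) /\ C (hs2 h)) -> (exists h, Vs h) ->
  exists aL Wm cmin cmax, 0 < aL < 1 / 2 /\ 1 <= Wm /\ 0 < cmin <= cmax /\
    forall eps st, 0 < eps -> Vs (hstate eps st) -> good_state aL Wm cmin cmax eps st.
Proof.
  intros cA cB cC HA HC HV [h0 Vh0]. destruct (HV h0 Vh0) as [Ah [Bh [Ch _]]].
  destruct (CompactBounds.compactR_min_max A cA (ex_intro _ _ Ah))
    as [loA [hiA [ALo [AHi Abd]]]].
  destruct (CompactBounds.compactR_min_max B cB (ex_intro _ _ Bh))
    as [loB [hiB [BLo [BHi Bbd]]]].
  destruct (CompactBounds.compactR_min_max C cC (ex_intro _ _ Ch))
    as [loC [hiC [CLo [CHi Cbd]]]].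
  pose proof (HA _ ALo); pose proof (HA _ AHi); pose proof (HC _ CLo); pose proof (Cbd _ CLo).
  pose proof (Rmax_l (Rabs loB) (Rabs hiB)); pose proof (Rmax_r (Rabs loB) (Rabs hiB)).
  set (Bmax := Rmax (Rabs loB) (Rabs hiB)) in *.
  pose proof (Rmin_l (loA / 2) ((1 - hiA) / 2)); pose proof (Rmin_r (loA / 2) ((1 - hiA) / 2)).
  assert (0 < Rmin (loA / 2) ((1 - hiA) / 2)) by (apply Rmin_pos; lra).
  exists (Rmin (loA / 2) ((1 - hiA) / 2)), (Bmax + 1), loC, hiC.
  split; [lra|]. split; [pose proof (Rabs_pos loB); lra|]. split; [lra|].
  intros eps st he hv. destruct (HV _ hv) as [a [b [c1 c2]]].
  unfold hstate, hX, hW, hs1, hs2 in a, b, c1, c2; cbn [fst snd] in a, b, c1, c2.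
  destruct (Abd _ a), (Bbd _ b), (Cbd _ c1), (Cbd _ c2).
  assert (hW : Rabs (pV st / eps) <= Bmax + 1).
  { pose proof (Rabs_maj2 loB). pose proof (Rle_abs hiB).
    unfold Rabs at 1; destruct Rcase_abs; lra. }
  unfold good_state. replace (pV st) with (eps * (pV st / eps)) by (field; lra).
  rewrite Rabs_mult, (Rabs_right eps) by lra.
  repeat split; try lra. apply Rmult_le_compat_l; lra.
Qed.

Lemma small_eps_exists m1 Wm cmin cmax : 0 < m1 -> 1 <= Wm -> 0 < cmin <= cmax ->
  exists eps1, 0 < eps1 /\ forall eps, 0 < eps <= eps1 ->
    eps <= 1 /\ eps * Wm + 2 * m1 * eps ^ 2 * (cmax + eps * Wm) < cmin / 4.
Proof.
  intros hm hW hc. set (D := Wm + 2 * m1 * (cmax + Wm)).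
  assert (hD : 0 < D) by (unfold D; nra).
  exists (Rmin 1 (cmin / (8 * D))).
  split; [apply Rmin_pos; [lra|apply Rdiv_lt_0_compat; lra]|].
  intros eps [he he1]. pose proof (Rmin_l 1 (cmin / (8 * D))); pose proof (Rmin_r 1 (cmin / (8 * D))).
  split; [lra|].
  assert (eD : eps * D <= cmin / 8).
  { apply Rle_trans with (cmin / (8 * D) * D); [apply Rmult_le_compat_r; lra|].
    right; field; lra. }
  assert (eps * Wm <= Wm) by nra.
  assert (eps ^ 2 * (cmax + eps * Wm) <= eps * (cmax + Wm))
    by (apply Rmult_le_compat; simpl; nra).
  assert (m1 * (eps ^ 2 * (cmax + eps * Wm)) <= m1 * (eps * (cmax + Wm)))
    by (apply Rmult_le_compat_l; lra).
  unfold D in eD. nra.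
Qed.

Theorem mainTheorem9
  (m1 m2 : R) (Hm1 : 0 < m1) (Hm2 : 0 < m2)
  (A B C : R -> Prop) (Vs : slow -> Prop)
  (cA : compactR A) (cB : compactR B) (cC : compactR C) (cV : compact4 Vs)
  (HA : forall x, A x -> 0 < x < 1) (HC : forall x, C x -> 0 < x)
  (HV : forall h, Vs h -> A (hX h) /\ B (hW h) /\ C (hs1 h) /\ C (hs2 h))
  (T : R) (HT : 0 < T) :
  exists eps1 Cst : R, 0 < eps1 /\ 0 < Cst /\
    forall eps : R, 0 < eps <= eps1 ->
    forall (z : R -> pstate) (hbar : R -> slow),
      is_motion m1 m2 (/ (eps ^ 2)) z ->
      admissible (z 0) ->
      Vs (hstate eps (z 0)) ->
      angle0 (phi1 (z 0)) ->
      solves_avg m1 m2 hbar (hstate eps (z 0)) ->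
      Rbar_le (t1_eps z)
        (Rbar_mult (Rbar_min (Finite T) (T_eps eps Vs hbar z)) (Finite (/ eps))) ->
      forall t : R, 0 <= t -> Rbar_le (Finite t) (t1_eps z) ->
        zdist eps (z 0) t (z t) <= Cst * eps.
Proof.
  destruct (classic (exists h, Vs h)) as [nonempty|empty].
  2: { exists 1, 1. split; [lra|]. split; [lra|].
       intros eps _ z hbar _ _ HV0. exfalso. apply empty. eauto. }
  destruct (slow_region_bounds A B C Vs cA cB cC HA HC HV nonempty)
    as [aL [Wm [cmin [cmax [HaL [HWm [Hc Hgood]]]]]]].
  destruct (small_eps_exists m1 Wm cmin cmax Hm1 HWm Hc) as [eps1 [Heps1 Hsmall]].
  exists eps1, (zdist_const m1 m2 aL Wm cmin cmax).
  split; [exact Heps1|]. split; [apply zdist_const_pos; lra|].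
  intros eps Heps z hbar Hmotion Hadm0 HV0 _ _ Hbefore t Ht Htt1.
  destruct (Hsmall eps Heps) as [Heps' Hsmall'].
  destruct (t1_eps_spec eps Vs hbar z T ltac:(lra) HT Hbefore)
    as [t1 [et1 [Ht1 [HVbefore Hangle]]]].
  rewrite et1 in Htt1. simpl in Htt1.
  assert (reg : regime m1 m2 aL Wm cmin cmax eps z t1).
  { apply regime_intro; auto; try lra.
    - apply Hgood; [lra|exact HV0].
    - intros u hu. apply Hgood; [lra|auto]. }
  apply (zdist_le m1 m2 aL Wm cmin cmax eps z t1); auto; lra.
Qed.
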